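(* Let $V$ be a two-dimensional real vector space equipped with a seminorm $|\cdot|_V$. For every set $X$, every $\sigma$-algebra $\Sigma$ on $X$ and every vector measure $\mu:\Sigma\to V$, $$|\mu|_V(X)=\tfrac12\,\mathrm{Per}_V(\mathcal{R}(\mu))$$ (and more generally $|\mu|_V(A)=\tfrac12\mathrm{Per}_V(\mathcal{R}_A(\mu))$ for every $A\in\Sigma$).
   Context: A vector measure is a countably additive map $\mu:\Sigma\to V$. Total variation: $|\mu|_V(A)=\sup\{\sum_{i=1}^m|\mu(E_i)|_V : E_1,\dots,E_m\in\Sigma \text{ pairwise disjoint subsets of } A\}$. Range: $\mathcal{R}_A(\mu)=\overline{\mathrm{conv}}\{\mu(E):E\in\Sigma,E\subseteq A\}$, $\mathcal{R}(\mu)=\mathcal{R}_X(\mu)$. Perimeter (with $\dim V=2$): for a convex polygon $P$ (convex hull of finitely many points) with vertices $v_1,\dots,v_\ell$ listed in cyclic order along its boundary, $\mathrm{Per}_V(P)=\sum_{i=1}^\ell|v_i-v_{i-1}|_V$ with $v_0=v_\ell$ (so a segment $[a,b]$ has perimeter $2|b-a|_V$); for a convex set $C\subseteq V$, $\mathrm{Per}_V(C)=\sup\{\mathrm{Per}_V(P): P\subseteq C \text{ a convex polygon}\}$. *)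

From Stdlib Require Import Reals Lra Lia Arith.
Open Scope R_scope.

(* The two-dimensional real vector space V is modelled as R*R (every
   2-dimensional real vector space is linearly isomorphic to R^2, and the
   seminorm is transported along the isomorphism). *)
Definition V2 := (R * R)%type.

Definition vadd (a b : V2) : V2 := (fst a + fst b, snd a + snd b).
Definition vsub (a b : V2) : V2 := (fst a - fst b, snd a - snd b).
Definition vscale (c : R) (a : V2) : V2 := (c * fst a, c * snd a).
Definition v0 : V2 := (0, 0).

Definition seminorm (N : V2 -> R) : Prop :=
  (forall a b, N (vadd a b) <= N a + N b) /\
  (forall c a, N (vscale c a) = Rabs c * N a).

Fixpoint rsum (f : nat -> R) (m : nat) : R :=
  match m with
  | O => 0
  | S k => rsum f k + f k
  end.

Fixpoint vsum (f : nat -> V2) (m : nat) : V2 :=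
  match m with
  | O => v0
  | S k => vadd (vsum f k) (f k)
  end.

Definition sigma_algebra {X : Type} (Sigma : (X -> Prop) -> Prop) : Prop :=
  Sigma (fun _ => True) /\
  (forall E, Sigma E -> Sigma (fun x => ~ E x)) /\
  (forall E : nat -> X -> Prop, (forall n, Sigma (E n)) ->
      Sigma (fun x => exists n, E n x)).

(* countably additive map mu : Sigma -> V (convergence in the standard
   (finite-dimensional) topology of V, i.e. componentwise) *)
Definition vector_measure {X : Type} (Sigma : (X -> Prop) -> Prop)
  (mu : (X -> Prop) -> V2) : Prop :=
  forall E : nat -> X -> Prop,
    (forall n, Sigma (E n)) ->
    (forall n m x, n <> m -> E n x -> E m x -> False) ->
    Un_cv (fun n => sum_f_R0 (fun i => fst (mu (E i))) n)
          (fst (mu (fun x => exists n, E n x))) /\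
    Un_cv (fun n => sum_f_R0 (fun i => snd (mu (E i))) n)
          (snd (mu (fun x => exists n, E n x))).

(* The set of values sum_i |mu(E_i)|_V over finite families of pairwise
   disjoint measurable subsets of A; |mu|_V(A) is its supremum. *)
Definition total_variation_set {X : Type} (N : V2 -> R)
  (Sigma : (X -> Prop) -> Prop) (mu : (X -> Prop) -> V2) (A : X -> Prop)
  : R -> Prop :=
  fun r => exists (m : nat) (E : nat -> X -> Prop),
    (forall i, (i < m)%nat -> Sigma (E i)) /\
    (forall i x, (i < m)%nat -> E i x -> A x) /\
    (forall i j x, (i < m)%nat -> (j < m)%nat -> i <> j -> E i x -> E j x -> False) /\
    r = rsum (fun i => N (mu (E i))) m.

Definition conv (S : V2 -> Prop) : V2 -> Prop :=
  fun p => exists (n : nat) (w : nat -> R) (q : nat -> V2),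
    (forall i, (i < n)%nat -> 0 <= w i /\ S (q i)) /\
    rsum w n = 1 /\
    p = vsum (fun i => vscale (w i) (q i)) n.

Definition closure (S : V2 -> Prop) : V2 -> Prop :=
  fun p => forall eps, 0 < eps -> exists q, S q /\
    Rabs (fst p - fst q) < eps /\ Rabs (snd p - snd q) < eps.

Definition vrange {X : Type} (Sigma : (X -> Prop) -> Prop)
  (mu : (X -> Prop) -> V2) (A : X -> Prop) : V2 -> Prop :=
  closure (conv (fun v => exists E, Sigma E /\ (forall x, E x -> A x) /\ v = mu E)).

Definition pts (v : nat -> V2) (l : nat) : V2 -> Prop :=
  fun p => exists i, (i < l)%nat /\ p = v i.

Definition cross (a b : V2) : R := fst a * snd b - snd a * fst b.

(* v_0, ..., v_(l-1) is the list of vertices of the convex polygon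
   conv{v_0,...,v_(l-1)}, listed in cyclic order along its boundary:
   the v_i are distinct extreme points, and each pair of cyclically
   consecutive vertices spans a supporting line (all vertices on the
   same side, with a consistent orientation). *)
Definition polygon_vertices (v : nat -> V2) (l : nat) : Prop :=
  (forall i j, (i < l)%nat -> (j < l)%nat -> v i = v j -> i = j) /\
  (forall i, (i < l)%nat ->
     ~ conv (fun p => exists j, (j < l)%nat /\ j <> i /\ p = v j) (v i)) /\
  ((forall i j, (i < l)%nat -> (j < l)%nat ->
      0 <= cross (vsub (v (S i mod l)) (v i)) (vsub (v j) (v i))) \/
   (forall i j, (i < l)%nat -> (j < l)%nat ->
      cross (vsub (v (S i mod l)) (v i)) (vsub (v j) (v i)) <= 0)).

Definition polygon_perimeter (N : V2 -> R) (v : nat -> V2) (l : nat) : R :=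
  rsum (fun i => N (vsub (v (S i mod l)) (v i))) l.

(* Set of perimeters of convex polygons contained in C; Per_V(C) is its
   supremum. *)
Definition perimeter_set (N : V2 -> R) (C : V2 -> Prop) : R -> Prop :=
  fun r => exists (v : nat -> V2) (l : nat),
    polygon_vertices v l /\
    (forall p, conv (pts v l) p -> C p) /\
    r = polygon_perimeter N v l.

From Stdlib Require Import Reals Lra Lia Psatz Classical FunctionalExtensionality
  PropExtensionality ClassicalEpsilon.
Open Scope R_scope.

(* Both sides
   are suprema, so it suffices to compare the two sets they are suprema of.

   - Lower bound.  For pairwise disjoint measurable E_1..E_m in A with U_k = mu(E_k),
     the zonotope sum_k [0,1] U_k is a convex polygon of perimeter 2 sum_k N(U_k)
     (walk along the U_k sorted by angle, then along their opposites), and its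
     vertices are subset sums of the U_k, i.e. measures of unions of the E_k, so it
     lies in R_A(mu) ([zonotope_polygon], [twice_variation_is_perimeter]).
   - Upper bound.  A convex polygon P in R_A(mu) has its vertices near convex
     combinations of values mu(E); refining all these sets E into one measurable
     partition F of A puts P in the zonotope of the mu(F_k) plus a small box.  The
     perimeter of a convex polygon inside a zonotope is at most 2 sum_k N(U_k)
     ([perimeter_in_zonotope]): for a single functional this is the fact that the
     boundary of a convex polygon crosses each level line twice
     ([edge_variation_le_width]), and N is bounded by a sum of such functionals
     that is exact on the U_k, the gauge of the polygon with vertices +-U_k/N(U_k)
     ([dominating_polygonal_seminorm]).  Perturbing N to a norm and reflecting
     clockwise polygons removes the remaining restrictions. *)
(** * Sums, determinants and seminorms on R^2 *)

Lemma rsum_ext f g m : (forall i, (i < m)%nat -> f i = g i) -> rsum f m = rsum g m.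
Proof. induction m; simpl; intros H; auto. rewrite IHm by (intros; apply H; lia). rewrite H by lia. auto. Qed.

Lemma rsum_plus f g m : rsum (fun i => f i + g i) m = rsum f m + rsum g m.
Proof. induction m; simpl; [lra|rewrite IHm; lra]. Qed.

Lemma rsum_scal c f m : rsum (fun i => c * f i) m = c * rsum f m.
Proof. induction m; simpl; [lra|rewrite IHm; lra]. Qed.

Lemma rsum_opp f m : rsum (fun i => - f i) m = - rsum f m.
Proof. induction m; simpl; [lra|rewrite IHm; lra]. Qed.

Lemma rsum_zero m : rsum (fun _ => 0) m = 0.
Proof. induction m; simpl; [lra|rewrite IHm; lra]. Qed.

Lemma rsum_le f g m : (forall i, (i < m)%nat -> f i <= g i) -> rsum f m <= rsum g m.
Proof.
  induction m; simpl; intros H; [lra|].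
  assert (f m <= g m) by (apply H; lia).
  assert (rsum f m <= rsum g m) by (apply IHm; intros; apply H; lia). lra.
Qed.

Lemma rsum_nonneg f m : (forall i, (i < m)%nat -> 0 <= f i) -> 0 <= rsum f m.
Proof. intros H. rewrite <- (rsum_zero m). apply rsum_le. auto. Qed.

Lemma rsum_pos (f : nat -> R) m : (forall b, (b < m)%nat -> 0 <= f b) ->
  (exists b, (b < m)%nat /\ f b > 0) -> rsum f m > 0.
Proof.
  intros H [b [Hb Hf]]. induction m; [lia|]. simpl. destruct (Nat.eq_dec b m).
  - subst. assert (0 <= rsum f m) by (apply rsum_nonneg; intros; apply H; lia). lra.
  - assert (rsum f m > 0) by (apply IHm; intros; try apply H; lia).
    assert (0 <= f m) by (apply H; lia). lra.
Qed.

Lemma rsum_weighted_pos (w F : nat -> R) n : (forall k, (k < n)%nat -> 0 <= w k) ->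
  (forall k, (k < n)%nat -> F k > 0) -> rsum w n > 0 -> rsum (fun k => w k * F k) n > 0.
Proof.
  intros Hw HF H. destruct (classic (exists k, (k < n)%nat /\ w k > 0)) as [[k [Hk Hwk]]|Hno].
  - apply rsum_pos.
    + intros i Hi. assert (0 <= w i) by auto. assert (F i > 0) by auto. nra.
    + exists k. split; auto. assert (F k > 0) by auto. nra.
  - exfalso. assert (rsum w n <= 0); [|lra].
    rewrite <- (rsum_zero n). apply rsum_le. intros i Hi.
    destruct (Rle_dec (w i) 0); auto. exfalso. apply Hno. exists i. split; auto; lra.
Qed.

Lemma rsum_split f m k : rsum f (m + k) = rsum f m + rsum (fun i => f (m + i)%nat) k.
Proof. induction k; simpl. rewrite Nat.add_0_r; lra. rewrite Nat.add_succ_r. simpl. rewrite IHk. lra. Qed.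

Lemma rsum_exchange (f : nat -> nat -> R) m n :
  rsum (fun i => rsum (fun j => f i j) n) m = rsum (fun j => rsum (fun i => f i j) m) n.
Proof. induction m; simpl. rewrite rsum_zero; auto. rewrite IHm, <- rsum_plus. auto. Qed.

Lemma rsum_telescope (f : nat -> R) m : rsum (fun i => f (S i) - f i) m = f m - f 0%nat.
Proof. induction m; simpl; [lra|]. rewrite IHm. lra. Qed.

Lemma rsum_single (f : nat -> R) m j : (j < m)%nat ->
  (forall i, (i < m)%nat -> i <> j -> f i = 0) -> rsum f m = f j.
Proof.
  induction m; intros Hj H; [lia|]. simpl. destruct (Nat.eq_dec j m).
  - subst. rewrite (rsum_ext f (fun _ => 0)) by (intros; apply H; lia). rewrite rsum_zero; lra.
  - rewrite IHm by (try lia; intros; apply H; lia). rewrite (H m) by lia. lra.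
Qed.

Lemma rsum_rotate (g : nat -> R) l s : (s < l)%nat ->
  rsum g l = rsum (fun t => g ((s + t) mod l)%nat) l.
Proof.
  intros Hs.
  replace l with (s + (l - s))%nat at 1 by lia. rewrite rsum_split.
  replace l with ((l - s) + s)%nat at 2 by lia. rewrite rsum_split.
  rewrite (rsum_ext (fun i => g ((s + i) mod l)%nat) (fun i => g (s + i)%nat)).
  2:{ intros i Hi. f_equal. apply Nat.mod_small. lia. }
  rewrite (rsum_ext (fun i => g ((s + (l - s + i)) mod l)%nat) g).
  2:{ intros i Hi. f_equal. replace (s + (l - s + i))%nat with (i + 1 * l)%nat by lia.
      rewrite Nat.Div0.mod_add. apply Nat.mod_small. lia. }
  lra.
Qed.

Lemma V2_eq (a b : V2) : fst a = fst b -> snd a = snd b -> a = b.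
Proof. destruct a, b; simpl; intros; subst; auto. Qed.

Lemma vsum_fst f m : fst (vsum f m) = rsum (fun i => fst (f i)) m.
Proof. induction m; simpl; auto. rewrite IHm; auto. Qed.

Lemma vsum_snd f m : snd (vsum f m) = rsum (fun i => snd (f i)) m.
Proof. induction m; simpl; auto. rewrite IHm; auto. Qed.

Lemma vsum_ext f g m : (forall i, (i < m)%nat -> f i = g i) -> vsum f m = vsum g m.
Proof. induction m; simpl; intros H; auto. rewrite IHm by (intros; apply H; lia). rewrite H by lia. auto. Qed.

Lemma vsum_single (f : nat -> V2) m c : (c < m)%nat ->
  (forall b, (b < m)%nat -> b <> c -> f b = v0) -> vsum f m = f c.
Proof.
  intros Hc H. apply V2_eq.
  - rewrite vsum_fst. apply (rsum_single (fun i => fst (f i))); auto. intros. rewrite H; auto.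
  - rewrite vsum_snd. apply (rsum_single (fun i => snd (f i))); auto. intros. rewrite H; auto.
Qed.

Definition vopp (x : V2) : V2 := vscale (-1) x.

Lemma cross_opp_l a b : cross (vopp a) b = - cross a b.
Proof. destruct a, b; unfold cross, vopp, vscale; simpl; ring. Qed.
Lemma cross_opp_r a b : cross a (vopp b) = - cross a b.
Proof. destruct a, b; unfold cross, vopp, vscale; simpl; ring. Qed.
Lemma cross_anti a b : cross a b = - cross b a.
Proof. destruct a, b; unfold cross; simpl; ring. Qed.
Lemma cross_self a : cross a a = 0.
Proof. destruct a; unfold cross; simpl; ring. Qed.
Lemma cross_scal_l t a b : cross (vscale t a) b = t * cross a b.
Proof. destruct a, b; unfold cross, vscale; simpl; ring. Qed.
Lemma cross_scal_r t a b : cross a (vscale t b) = t * cross a b.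
Proof. destruct a, b; unfold cross, vscale; simpl; ring. Qed.
Lemma cross_sub_l a b c : cross (vsub a b) c = cross a c - cross b c.
Proof. destruct a, b, c; unfold cross, vsub; simpl; ring. Qed.
Lemma cross_sub_r a b c : cross c (vsub a b) = cross c a - cross c b.
Proof. destruct a, b, c; unfold cross, vsub; simpl; ring. Qed.
Lemma cross_add_r a b c : cross c (vadd a b) = cross c a + cross c b.
Proof. destruct a, b, c; unfold cross, vadd; simpl; ring. Qed.
Lemma cross_v0 e : cross e v0 = 0.
Proof. unfold cross, v0; simpl; ring. Qed.
Lemma cross_if e (b : bool) x : cross e (if b then x else v0) = if b then cross e x else 0.
Proof. destruct b; auto. apply cross_v0. Qed.

Lemma cross_vsum_r d f m : cross d (vsum f m) = rsum (fun i => cross d (f i)) m.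
Proof.
  unfold cross. rewrite vsum_fst, vsum_snd, <- (rsum_scal (fst d)), <- (rsum_scal (snd d)).
  unfold Rminus. rewrite <- rsum_opp, <- rsum_plus. apply rsum_ext; intros; lra.
Qed.

Lemma plucker (a b c r : V2) :
  cross a c * cross r b = cross a b * cross r c + cross b c * cross r a.
Proof. destruct a, b, c, r; unfold cross; simpl; ring. Qed.

Lemma V2_cross_eq x y : (forall e, cross e x = cross e y) -> x = y.
Proof.
  intros H. pose proof (H (1,0)) as H1. pose proof (H (0,1)) as H2.
  destruct x, y; unfold cross in *; simpl in *. f_equal; lra.
Qed.

Lemma cross_par (u w : V2) : cross u w = 0 -> u <> v0 -> exists t, w = vscale t u.
Proof.
  destruct u as [a b], w as [c e]; unfold cross, vscale, v0; simpl; intros H Hn.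
  destruct (Req_dec a 0).
  - assert (b <> 0) by (intro; apply Hn; subst; auto). exists (e / b). subst.
    f_equal; field_simplify; auto; nra.
  - exists (c / a). f_equal. field; auto. apply (Rmult_eq_reg_l a); auto. field_simplify; auto. nra.
Qed.

Lemma vscale_vscale s t x : vscale s (vscale t x) = vscale (s * t) x.
Proof. destruct x; unfold vscale; simpl; f_equal; ring. Qed.

Section Seminorm.
Variable N : V2 -> R.
Hypothesis HN : seminorm N.

Lemma sn_tri a b : N (vadd a b) <= N a + N b.
Proof. apply HN. Qed.

Lemma sn_hom c a : N (vscale c a) = Rabs c * N a.
Proof. apply HN. Qed.

Lemma sn_zero : N v0 = 0.
Proof.
  replace v0 with (vscale 0 v0) by (unfold vscale, v0; simpl; f_equal; lra).
  rewrite sn_hom, Rabs_R0; lra.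
Qed.

Lemma sn_opp a : N (vopp a) = N a.
Proof. unfold vopp. rewrite sn_hom, Rabs_left by lra. lra. Qed.

Lemma sn_nonneg a : 0 <= N a.
Proof.
  pose proof (sn_tri a (vopp a)) as H. rewrite sn_opp in H.
  replace (vadd a (vopp a)) with v0 in H
    by (unfold vadd, vopp, vscale, v0; destruct a; simpl; f_equal; lra).
  rewrite sn_zero in H. lra.
Qed.

End Seminorm.

(** * Convex hulls and convex polygons *)

Lemma conv_point (S : V2 -> Prop) p : S p -> conv S p.
Proof.
  intros H. exists 1%nat, (fun _ => 1), (fun _ => p). split; [|split].
  - intros i Hi; split; auto; lra.
  - simpl; lra.
  - simpl. destruct p; unfold vadd, vscale, v0; simpl; f_equal; ring.
Qed.

Lemma conv_mono (S T : V2 -> Prop) p : (forall q, S q -> T q) -> conv S p -> conv T p.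
Proof. intros H [n [w [q [H1 [H2 H3]]]]]. exists n, w, q. split; auto. intros i Hi. destruct (H1 i Hi); auto. Qed.

Definition vlin (a : R) (p : V2) (b : R) (q : V2) : V2 := vadd (vscale a p) (vscale b q).

Lemma conv_two (S : V2 -> Prop) p q lam : S p -> S q -> 0 <= lam <= 1 ->
  conv S (vlin lam p (1 - lam) q).
Proof.
  intros Hp Hq Hl. exists 2%nat, (fun i => if Nat.eqb i 0 then lam else 1 - lam),
    (fun i => if Nat.eqb i 0 then p else q). split; [|split].
  - intros i Hi. destruct i as [|[|]]; simpl; split; try lra; auto; lia.
  - simpl. lra.
  - simpl. unfold vlin, vadd, vscale, v0. destruct p, q; simpl. f_equal; lra.
Qed.

Lemma conv_single (a x : V2) : conv (fun p => p = a) x -> x = a.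
Proof.
  intros [n [w [q [H1 [H2 H3]]]]]. subst x.
  rewrite (vsum_ext _ (fun i => vscale (w i) a)) by (intros i Hi; destruct (H1 i Hi) as [_ ->]; auto).
  apply V2_eq; [rewrite vsum_fst|rewrite vsum_snd];
    [rewrite (rsum_ext _ (fun i => fst a * w i)) by (intros; unfold vscale; simpl; ring)
    |rewrite (rsum_ext _ (fun i => snd a * w i)) by (intros; unfold vscale; simpl; ring)];
    rewrite rsum_scal, H2; ring.
Qed.

Lemma conv_affine_pos (S : V2 -> Prop) (e : V2) (c0 : R) p :
  (forall q, S q -> cross e q + c0 > 0) -> conv S p -> cross e p + c0 > 0.
Proof.
  intros H [n [w [q [H1 [H2 H3]]]]]. subst p. rewrite cross_vsum_r.
  replace (rsum (fun i => cross e (vscale (w i) (q i))) n + c0)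
    with (rsum (fun k => w k * (cross e (q k) + c0)) n).
  2:{ rewrite (rsum_ext _ (fun k => w k * cross e (q k) + c0 * w k)) by (intros; ring).
      rewrite rsum_plus, rsum_scal, H2. f_equal. apply rsum_ext. intros; rewrite cross_scal_r; auto. ring. }
  apply rsum_weighted_pos; try lra.
  - intros k Hk; apply H1; auto.
  - intros k Hk; apply H; apply H1; auto.
Qed.

Lemma closure_self (S : V2 -> Prop) p : S p -> closure S p.
Proof. intros H eps He. exists p. split; auto. rewrite !Rminus_diag_eq by auto. rewrite Rabs_R0. lra. Qed.

Lemma collinear3 a b c : cross (vsub b a) (vsub c a) = 0 -> a <> b -> a <> c -> b <> c ->
  exists lam, 0 <= lam <= 1 /\
   (c = vlin lam a (1-lam) b \/ b = vlin lam a (1-lam) c \/ a = vlin lam b (1-lam) c).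
Proof.
  intros H Hab Hac Hbc.
  assert (Hn : vsub b a <> v0).
  { intro E. apply Hab. destruct a, b; unfold vsub, v0 in E; simpl in E. inversion E. f_equal; lra. }
  destruct (cross_par _ _ H Hn) as [t Ht].
  destruct a as [a1 a2], b as [b1 b2], c as [c1 c2]. unfold vsub, vscale in Ht; simpl in Ht.
  inversion Ht as [[H1 H2]]. unfold vlin, vadd, vscale.
  assert (t <> 0) by (intro; subst; apply Hac; f_equal; lra).
  assert (t <> 1) by (intro; subst; apply Hbc; f_equal; lra).
  replace c1 with (a1 + t * (b1 - a1)) by lra. replace c2 with (a2 + t * (b2 - a2)) by lra.
  destruct (Rle_dec t 1); destruct (Rle_dec 0 t); try lra.
  - exists (1 - t). split; [lra|]. left. simpl. f_equal; ring.
  - exists (- t / (1 - t)). split.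
    + split; [apply Rmult_le_pos; try lra; left; apply Rinv_0_lt_compat; lra|].
      apply (Rmult_le_reg_r (1 - t)); try lra. unfold Rdiv. rewrite Rmult_assoc, Rinv_l; lra.
    + right; right. simpl. f_equal; field; lra.
  - assert (0 < 1 / t) by (apply Rdiv_lt_0_compat; lra).
    assert (1 / t < 1) by (apply (Rmult_lt_reg_r t); try lra; unfold Rdiv; rewrite Rmult_assoc, Rinv_l; lra).
    exists (1 - 1 / t). split; [lra|]. right; left. simpl. f_equal; field; lra.
Qed.

Lemma add_mod_cases l p t : (p < l)%nat -> (t < l)%nat ->
  ((p + t) mod l = p + t /\ p + t < l \/ (p + t) mod l = p + t - l /\ l <= p + t)%nat.
Proof.
  intros Hp Ht. destruct (Nat.lt_ge_cases (p + t) l).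
  - left. rewrite Nat.mod_small; auto.
  - right. replace (p + t)%nat with ((p + t - l) + 1 * l)%nat at 1 by lia.
    rewrite Nat.Div0.mod_add, Nat.mod_small; lia.
Qed.

Lemma mod_lt l p t : (0 < l)%nat -> ((p + t) mod l < l)%nat.
Proof. intros; apply Nat.mod_upper_bound; lia. Qed.

Lemma mod_S l p t : (0 < l)%nat -> (S ((p + t) mod l) mod l = (p + S t) mod l)%nat.
Proof.
  intros. replace (S ((p + t) mod l)) with ((p + t) mod l + 1)%nat by lia.
  rewrite Nat.Div0.add_mod_idemp_l. f_equal; lia.
Qed.

Lemma mod_add_assoc l p a k : ((p + a) mod l + k) mod l = (p + (a + k)) mod l.
Proof. rewrite Nat.Div0.add_mod_idemp_l. f_equal. lia. Qed.

Lemma mod_add_l l p : (p < l)%nat -> ((p + l) mod l = p)%nat.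
Proof. intros. replace (p + l)%nat with (p + 1 * l)%nat by lia. rewrite Nat.Div0.mod_add. apply Nat.mod_small; auto. Qed.

Lemma argmax_fin (b : nat -> R) L : exists t, (t <= L)%nat /\ forall t', (t' <= L)%nat -> b t' <= b t.
Proof.
  induction L.
  - exists 0%nat. split; auto. intros t' H. replace t' with 0%nat by lia. lra.
  - destruct IHL as [t [Ht H]]. destruct (Rle_dec (b (S L)) (b t)).
    + exists t. split; [lia|]. intros t' H'. destruct (Nat.eq_dec t' (S L)); [subst; auto|apply H; lia].
    + exists (S L). split; [lia|]. intros t' H'. destruct (Nat.eq_dec t' (S L)); [subst; lra|].
      assert (b t' <= b t) by (apply H; lia). lra.
Qed.

Lemma argmin_fin (g : nat -> R) l : (0 < l)%nat ->
  exists s, (s < l)%nat /\ forall j, (j < l)%nat -> g s <= g j.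
Proof.
  intros Hl. destruct (argmax_fin (fun i => - g i) (l - 1)) as [t [Ht H]].
  exists t. split; [lia|]. intros j Hj. specialize (H j ltac:(lia)). lra.
Qed.

(* A closed sequence b_0, ..., b_L = b_0 starting at its minimum and without
   interior local minima rises once and falls once, so its total variation is
   at most twice its oscillation W. *)
Lemma unimodal_variation (b : nat -> R) L W : b L = b 0%nat ->
  (forall t, (t <= L)%nat -> b 0%nat <= b t) ->
  (forall t t', (t <= L)%nat -> (t' <= L)%nat -> b t - b t' <= W) ->
  (forall t1 t2 t3, (t1 < t2)%nat -> (t2 < t3)%nat -> (t3 <= L)%nat -> b t1 <= b t2 \/ b t3 <= b t2) ->
  rsum (fun t => Rabs (b (S t) - b t)) L <= 2 * W.
Proof.
  intros HL Hmin HW Hnd. destruct (argmax_fin b L) as [m [Hm Hmax]].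
  replace L with (m + (L - m))%nat at 1 by lia. rewrite rsum_split.
  rewrite (rsum_ext _ (fun t => b (S t) - b t)).
  2:{ intros i Hi. rewrite Rabs_right; auto. apply Rle_ge.
      destruct (Nat.eq_dec (S i) m); [subst; specialize (Hmax i ltac:(lia)); lra|].
      destruct (Hnd i (S i) m ltac:(lia) ltac:(lia) ltac:(lia)); [lra|].
      specialize (Hmax i ltac:(lia)). lra. }
  rewrite rsum_telescope.
  rewrite (rsum_ext _ (fun t => - (b (m + S t)%nat - b (m + t)%nat))).
  2:{ intros i Hi. replace (m + S i)%nat with (S (m + i)) by lia. rewrite Rabs_left1; auto.
      destruct (Nat.eq_dec i 0); [subst; rewrite Nat.add_0_r; specialize (Hmax (S m) ltac:(lia)); lra|].
      destruct (Hnd m (m + i)%nat (S (m + i)) ltac:(lia) ltac:(lia) ltac:(lia)); [|lra].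
      specialize (Hmax (S (m + i)) ltac:(lia)). lra. }
  rewrite rsum_opp, (rsum_telescope (fun t => b (m + t)%nat)), Nat.add_0_r.
  replace (m + (L - m))%nat with L by lia.
  specialize (HW m 0%nat Hm ltac:(lia)). lra.
Qed.

Lemma fan_value_above_min (r1 r2 r3 d : V2) :
  0 < cross r1 r2 -> 0 < cross r2 r3 -> 0 < cross r1 r3 -> 0 < cross (vsub r2 r1) (vsub r3 r1) ->
  0 <= cross d r1 -> 0 <= cross d r3 ->
  cross d r1 <= cross d r2 \/ cross d r3 <= cross d r2.
Proof.
  intros H12 H23 H13 Hchord H1 H3.
  assert (Hid : cross r1 r3 * cross d r2 = cross r2 r3 * cross d r1 + cross r1 r2 * cross d r3)
    by (destruct r1, r2, r3, d; unfold cross; simpl; ring).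
  assert (Hsum : cross (vsub r2 r1) (vsub r3 r1) = cross r1 r2 + cross r2 r3 - cross r1 r3)
    by (destruct r1, r2, r3; unfold cross, vsub; simpl; ring).
  rewrite Hsum in Hchord.
  destruct (Rle_dec (cross d r1) (cross d r3)); [left|right]; apply Rnot_lt_le; intro Hlt.
  - assert (cross r1 r3 * cross d r2 < cross r1 r3 * cross d r1) by (apply Rmult_lt_compat_l; lra). nra.
  - assert (cross r1 r3 * cross d r2 < cross r1 r3 * cross d r3) by (apply Rmult_lt_compat_l; lra). nra.
Qed.

Section ConvexPolygon.
Variable v : nat -> V2.
Variable l : nat.
Hypothesis Hdistinct : forall i j, (i < l)%nat -> (j < l)%nat -> v i = v j -> i = j.
Hypothesis Hextreme : forall i, (i < l)%nat ->
  ~ conv (fun p => exists j, (j < l)%nat /\ j <> i /\ p = v j) (v i).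

Lemma vertices_not_collinear i j k : (i < l)%nat -> (j < l)%nat -> (k < l)%nat ->
  i <> j -> i <> k -> j <> k -> cross (vsub (v j) (v i)) (vsub (v k) (v i)) <> 0.
Proof.
  intros Hi Hj Hk Hij Hik Hjk H.
  assert (v i <> v j) by (intro E; apply Hij; apply Hdistinct; auto).
  assert (v i <> v k) by (intro E; apply Hik; apply Hdistinct; auto).
  assert (v j <> v k) by (intro E; apply Hjk; apply Hdistinct; auto).
  destruct (collinear3 _ _ _ H H0 H1 H2) as [lam [Hl [E|[E|E]]]].
  - apply (Hextreme k Hk). rewrite E. apply conv_two; auto. exists i; auto. exists j; auto.
  - apply (Hextreme j Hj). rewrite E. apply conv_two; auto. exists i; auto. exists k; auto.
  - apply (Hextreme i Hi). rewrite E. apply conv_two; auto. exists j; auto. exists k; auto.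
Qed.

Hypothesis Hccw : forall i j, (i < l)%nat -> (j < l)%nat ->
  0 <= cross (vsub (v (S i mod l)) (v i)) (vsub (v j) (v i)).

Definition ray p t := vsub (v ((p + t) mod l)) (v p).

Lemma ray_fan p t t' : (3 <= l)%nat -> (p < l)%nat -> (1 <= t)%nat -> (t < t')%nat ->
  (t' < l)%nat -> 0 < cross (ray p t) (ray p t').
Proof.
  intros Hl Hp Ht Htt' Ht'.
  assert (Hstrict : forall a b, (a < l)%nat -> (b < l)%nat -> (1 <= a)%nat -> (1 <= b)%nat ->
            a <> b -> cross (ray p a) (ray p b) <> 0).
  { intros a b Ha Hb Ha1 Hb1 Hab. unfold ray.
    apply vertices_not_collinear; try apply mod_lt; try lia;
      destruct (add_mod_cases l p a); destruct (add_mod_cases l p b); lia. }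
  assert (Fsucc : forall a, (1 <= a)%nat -> (a + 1 < l)%nat -> 0 < cross (ray p a) (ray p (S a))).
  { intros a Ha Ha'. assert (0 <= cross (ray p a) (ray p (S a))).
    { pose proof (Hccw ((p + a) mod l) p (mod_lt l p a ltac:(lia)) Hp) as H.
      rewrite mod_S in H by lia. unfold ray.
      destruct (v ((p + S a) mod l)), (v ((p + a) mod l)), (v p).
      unfold cross, vsub in *; simpl in *. nra. }
    assert (cross (ray p a) (ray p (S a)) <> 0) by (apply Hstrict; lia). lra. }
  assert (Ffirst : forall a, (2 <= a)%nat -> (a < l)%nat -> 0 < cross (ray p 1) (ray p a)).
  { intros a Ha Ha'. assert (0 <= cross (ray p 1) (ray p a)).
    { pose proof (Hccw p ((p + a) mod l) Hp (mod_lt l p a ltac:(lia))) as H.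
      replace (S p) with (p + 1)%nat in H by lia. exact H. }
    assert (cross (ray p 1) (ray p a) <> 0) by (apply Hstrict; lia). lra. }
  induction t' as [|t'' IH]; [lia|].
  destruct (Nat.eq_dec t t''); [subst; apply Fsucc; lia|].
  assert (0 < cross (ray p t) (ray p t'')) by (apply IH; lia).
  assert (0 < cross (ray p 1) (ray p t'')) by (apply Ffirst; lia).
  assert (0 < cross (ray p 1) (ray p (S t''))) by (apply Ffirst; lia).
  assert (0 < cross (ray p t'') (ray p (S t''))) by (apply Fsucc; lia).
  assert (0 <= cross (ray p 1) (ray p t))
    by (destruct (Nat.eq_dec t 1); [subst; rewrite cross_self; lra|left; apply Ffirst; lia]).
  pose proof (plucker (ray p t) (ray p t'') (ray p (S t'')) (ray p 1)). nra.
Qed.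

Lemma boundary_no_interior_min (d : V2) s t1 t2 t3 : (3 <= l)%nat -> (s < l)%nat ->
  (forall j, (j < l)%nat -> cross d (v s) <= cross d (v j)) ->
  (0 < t1)%nat -> (t1 < t2)%nat -> (t2 < t3)%nat -> (t3 < l)%nat ->
  cross d (v ((s + t1) mod l)) <= cross d (v ((s + t2) mod l)) \/
  cross d (v ((s + t3) mod l)) <= cross d (v ((s + t2) mod l)).
Proof.
  intros Hl Hs Hmin H1 H12 H23 H3.
  assert (Hval : forall t, cross d (v ((s + t) mod l)) = cross d (ray s t) + cross d (v s))
    by (intros; unfold ray; rewrite cross_sub_r; ring).
  assert (Hshift : forall t, (t1 <= t)%nat ->
            ray ((s + t1) mod l) (t - t1) = vsub (ray s t) (ray s t1)).
  { intros t Ht. unfold ray. rewrite mod_add_assoc. replace (t1 + (t - t1))%nat with t by lia.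
    destruct (v ((s + t) mod l)), (v ((s + t1) mod l)), (v s); unfold vsub; simpl; f_equal; ring. }
  rewrite !Hval.
  destruct (fan_value_above_min (ray s t1) (ray s t2) (ray s t3) d) as [H|H]; try lra.
  - apply ray_fan; lia.
  - apply ray_fan; lia.
  - apply ray_fan; lia.
  - rewrite <- !Hshift by lia. apply ray_fan; try apply mod_lt; lia.
  - specialize (Hmin ((s + t1) mod l)%nat (mod_lt l s t1 ltac:(lia))). rewrite Hval in Hmin. lra.
  - specialize (Hmin ((s + t3) mod l)%nat (mod_lt l s t3 ltac:(lia))). rewrite Hval in Hmin. lra.
Qed.

Lemma edge_variation_le_width (d : V2) W : 0 <= W ->
  (forall i j, (i < l)%nat -> (j < l)%nat -> cross d (v i) - cross d (v j) <= W) ->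
  rsum (fun i => Rabs (cross d (vsub (v (S i mod l)) (v i)))) l <= 2 * W.
Proof.
  intros HW0 HW.
  assert (Hdiff : forall i j, cross d (vsub (v i) (v j)) = cross d (v i) - cross d (v j))
    by (intros; apply cross_sub_r).
  destruct (Nat.lt_ge_cases l 3) as [Hsmall|Hl].
  - destruct l as [|[|[|]]]; simpl; rewrite ?Hdiff; try lia.
    + lra.
    + rewrite Rminus_diag_eq, Rabs_R0 by auto. lra.
    + pose proof (HW 1%nat 0%nat ltac:(lia) ltac:(lia)). pose proof (HW 0%nat 1%nat ltac:(lia) ltac:(lia)).
      unfold Rabs; destruct Rcase_abs; destruct Rcase_abs; lra.
  - destruct (argmin_fin (fun j => cross d (v j)) l ltac:(lia)) as [s [Hs Hmin]].
    rewrite (rsum_rotate _ l s Hs).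
    set (b := fun t => cross d (v ((s + t) mod l)%nat)).
    rewrite (rsum_ext _ (fun t => Rabs (b (S t) - b t))).
    2:{ intros i Hi. unfold b. rewrite (mod_S l s i), Hdiff by lia. auto. }
    assert (Hb0 : b 0%nat = cross d (v s)) by (unfold b; rewrite Nat.add_0_r, Nat.mod_small; auto).
    assert (HbL : b l = cross d (v s)) by (unfold b; rewrite mod_add_l; auto).
    apply unimodal_variation.
    + congruence.
    + intros t Ht. rewrite Hb0. apply Hmin, mod_lt; lia.
    + intros t t' _ _. apply HW; apply mod_lt; lia.
    + intros t1 t2 t3 H12 H23 H3.
      destruct (Nat.eq_dec t1 0); [subst; left; rewrite Hb0; apply Hmin, mod_lt; lia|].
      destruct (Nat.eq_dec t3 l); [subst; right; rewrite HbL; apply Hmin, mod_lt; lia|].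
      apply boundary_no_interior_min; auto; lia.
Qed.

End ConvexPolygon.

(** * Sorting directions by angle *)

(* The half-open upper half-plane: for every nonzero u exactly one of u, -u lies in it,
   and on it the sign of [cross] is a strict order by angle. *)
Definition upper (a : V2) : Prop := snd a > 0 \/ (snd a = 0 /\ fst a > 0).

Definition sorted (a : nat -> V2) (n : nat) : Prop :=
  (forall b, (b < n)%nat -> upper (a b)) /\
  (forall b b', (b < b')%nat -> (b' < n)%nat -> cross (a b) (a b') > 0).

Lemma upper_nz a : upper a -> a <> v0.
Proof. unfold upper, v0. destruct a; simpl; intros [H|[H1 H2]] E; inversion E; lra. Qed.

Lemma upper_par a c : upper a -> upper c -> cross a c = 0 -> exists lam, lam > 0 /\ c = vscale lam a.
Proof.
  intros Ha Hc H. destruct (cross_par a c H (upper_nz a Ha)) as [t Ht].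
  exists t. split; auto. subst c. destruct a as [x y]; unfold upper, vscale in *; simpl in *.
  destruct (Rlt_dec 0 t) as [|Ht]; [lra|]. apply Rnot_lt_le in Ht. exfalso.
  destruct Ha as [Ha|[Ha1 Ha2]]; destruct Hc as [Hc|[Hc1 Hc2]]; try nra.
  assert (t = 0) by nra. subst. lra.
Qed.

Lemma upper_trans a b c : upper a -> upper b -> upper c ->
  cross a b > 0 -> cross b c > 0 -> cross a c > 0.
Proof.
  intros Ha Hb Hc H1 H2. pose proof (plucker a b c (1,0)) as P.
  destruct a as [a1 a2], b as [b1 b2], c as [c1 c2]; unfold upper, cross in *; simpl in *.
  destruct Hb as [Hb|[Hb1 Hb2]].
  - destruct Ha as [Ha|[Ha1 Ha2]]; destruct Hc as [Hc|[Hc1 Hc2]]; nra.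
  - subst. nra.
Qed.

Lemma upper_trans_w a b c : upper a -> upper b -> upper c ->
  cross a b > 0 -> cross b c >= 0 -> cross a c > 0.
Proof.
  intros Ha Hb Hc H1 H2. destruct (Rle_lt_or_eq_dec 0 (cross b c)) as [H|H]; [lra| |].
  - apply (upper_trans a b c); auto; lra.
  - destruct (upper_par b c Hb Hc (eq_sym H)) as [lam [Hl E]]. subst c.
    rewrite cross_scal_r. nra.
Qed.

Lemma upper_or_opp (u : V2) : u <> v0 -> upper u \/ upper (vopp u).
Proof.
  destruct u as [x y]; unfold upper, vopp, vscale, v0; simpl; intros H.
  destruct (Rtotal_order y 0) as [|[|]]; [right; left; lra| |left; left; auto]. subst.
  destruct (Rtotal_order x 0) as [|[|]]; [right; right; split; lra|subst; exfalso; auto|left; right; auto].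
Qed.

Lemma upper_multiple (u : V2) : u <> v0 -> exists sg u', upper u' /\ u = vscale sg u'.
Proof.
  intros Hnz. destruct (upper_or_opp _ Hnz).
  - exists 1, u. split; auto. destruct u; unfold vscale; simpl; f_equal; lra.
  - exists (-1), (vopp u). split; auto. destruct u; unfold vopp, vscale; simpl; f_equal; lra.
Qed.

Lemma sorted_split (c : nat -> V2) n x : sorted c n -> upper x ->
  exists m, (m <= n)%nat /\ (forall b, (b < m)%nat -> cross (c b) x >= 0) /\
     (forall b, (m <= b)%nat -> (b < n)%nat -> cross (c b) x < 0).
Proof.
  intros [Hup Hord] Hx. induction n as [|n' IH].
  - exists 0%nat. repeat split; intros; lia.
  - destruct IH as [p [Hp [H1 H2]]]; [intros; apply Hup; lia|intros; apply Hord; lia|].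
    destruct (Nat.eq_dec p n').
    + subst. destruct (Rle_dec 0 (cross (c n') x)) as [Hc|Hc].
      * exists (S n'). split; [lia|split; [|intros; lia]].
        intros b Hb. destruct (Nat.eq_dec b n'); [subst; lra|apply H1; lia].
      * exists n'. split; [lia|split]; auto. intros b Hb1 Hb2. replace b with n' by lia. lra.
    + exists p. split; [lia|split]; auto. intros b Hb1 Hb2. destruct (Nat.eq_dec b n'); [|apply H2; lia].
      subst. assert (cross (c p) x < 0) by (apply H2; lia).
      destruct (Rlt_dec (cross (c n') x) 0); auto. exfalso.
      assert (cross (c p) x > 0); [|lra].
      apply (upper_trans_w (c p) (c n') x); try apply Hup; try lia; auto; [apply Hord; lia|lra].
Qed.

Definition ins (a : nat -> V2) p (u : V2) : nat -> V2 :=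
  fun b => if Nat.ltb b p then a b else if Nat.eqb b p then u else a (b - 1)%nat.

Lemma ins_lt a p u b : (b < p)%nat -> ins a p u b = a b.
Proof. intros. unfold ins. destruct (Nat.ltb_spec b p); lia || auto. Qed.
Lemma ins_eq a p u : ins a p u p = u.
Proof. unfold ins. destruct (Nat.ltb_spec p p); try lia. rewrite Nat.eqb_refl. auto. Qed.
Lemma ins_gt a p u b : (p < b)%nat -> ins a p u b = a (b - 1)%nat.
Proof. intros. unfold ins. destruct (Nat.ltb_spec b p); try lia. destruct (Nat.eqb_spec b p); lia || auto. Qed.

Lemma sorted_insert (a : nat -> V2) n u : sorted a n -> upper u ->
  (forall b, (b < n)%nat -> cross (a b) u <> 0) ->
  exists p, (p <= n)%nat /\ sorted (ins a p u) (S n).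
Proof.
  intros Hs Hu Hnp. destruct (sorted_split a n u Hs Hu) as [p [Hp [Hlt Hgt]]].
  exists p. split; auto. destruct Hs as [Hup Hord]. split.
  - intros b Hb. destruct (Nat.lt_total b p) as [?|[?|?]].
    + rewrite ins_lt; auto; apply Hup; lia.
    + subst; rewrite ins_eq; auto.
    + rewrite ins_gt; auto; apply Hup; lia.
  - intros b b' Hbb' Hb'.
    destruct (Nat.lt_total b p) as [?|[?|?]]; destruct (Nat.lt_total b' p) as [?|[?|?]]; try lia.
    + rewrite !ins_lt; auto; apply Hord; lia.
    + subst. rewrite ins_lt, ins_eq; auto.
      assert (cross (a b) u >= 0) by (apply Hlt; auto). assert (cross (a b) u <> 0) by (apply Hnp; lia). lra.
    + rewrite ins_lt, ins_gt; auto. apply Hord; lia.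
    + subst. rewrite ins_eq, ins_gt; auto. rewrite cross_anti.
      assert (cross (a (b' - 1)%nat) u < 0) by (apply Hgt; lia). lra.
    + rewrite !ins_gt; auto. apply Hord; lia.
Qed.

Lemma sort_directions K (u : nat -> V2) :
  exists n a (bet : nat -> nat) (lam : nat -> R), sorted a n /\
   (forall k, (k < K)%nat -> u k <> v0 -> (bet k < n)%nat /\ u k = vscale (lam k) (a (bet k))) /\
   (forall b, (b < n)%nat -> exists k, (k < K)%nat /\ u k <> v0 /\ bet k = b).
Proof.
  induction K.
  - exists 0%nat, (fun _ => v0), (fun _ => 0%nat), (fun _ => 0).
    split; [split; intros; lia|split; intros; lia].
  - destruct IHK as [n [a [bet [lam [Hs [Hrep Hused]]]]]].
    destruct (classic (u K = v0)) as [Hz|Hnz].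
    { exists n, a, bet, lam. split; [auto|split].
      - intros k Hk Hu. destruct (Nat.eq_dec k K); [subst; contradiction|apply Hrep; auto; lia].
      - intros b Hb. destruct (Hused b Hb) as [k [Hk Hk2]]. exists k; split; auto; lia. }
    destruct (upper_multiple _ Hnz) as [sg [u' [Hu' Eu]]].
    destruct (classic (exists b, (b < n)%nat /\ cross (a b) u' = 0)) as [[b [Hb Hpar]]|Hnpar].
    +
      destruct (upper_par (a b) u' (proj1 Hs b Hb) Hu' Hpar) as [m [Hm Em]].
      exists n, a, (fun k => if Nat.eqb k K then b else bet k),
        (fun k => if Nat.eqb k K then sg * m else lam k).
      split; [auto|split].
      * intros k Hk Hu. destruct (Nat.eqb_spec k K).
        -- subst k. split; auto. rewrite Eu, Em, vscale_vscale. auto.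
        -- apply Hrep; auto; lia.
      * intros b' Hb'. destruct (Hused b' Hb') as [k [Hk [Hk2 Hk3]]]. exists k.
        destruct (Nat.eqb_spec k K); [lia|auto].
    +
      assert (Hnp : forall b, (b < n)%nat -> cross (a b) u' <> 0) by (intros b Hb E; apply Hnpar; eauto).
      destruct (sorted_insert a n u' Hs Hu' Hnp) as [p [Hp Hs']].
      exists (S n), (ins a p u'),
        (fun k => if Nat.eqb k K then p else if Nat.ltb (bet k) p then bet k else S (bet k)),
        (fun k => if Nat.eqb k K then sg else lam k).
      split; [auto|split].
      * intros k Hk Hu. destruct (Nat.eqb_spec k K); [subst; rewrite ins_eq; split; auto; lia|].
        destruct (Hrep k ltac:(lia) Hu) as [Hbk Ek]. destruct (Nat.ltb_spec (bet k) p).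
        -- rewrite ins_lt by auto. split; [lia|auto].
        -- rewrite ins_gt by lia. replace (S (bet k) - 1)%nat with (bet k) by lia. split; [lia|auto].
      * intros b Hb. destruct (Nat.lt_total b p) as [?|[?|?]].
        -- destruct (Hused b ltac:(lia)) as [k [Hk [Hk2 Hk3]]]. exists k. split; [lia|split; auto].
           destruct (Nat.eqb_spec k K); try lia. destruct (Nat.ltb_spec (bet k) p); lia.
        -- exists K. split; [lia|split]; [congruence|]. rewrite Nat.eqb_refl; auto.
        -- destruct (Hused (b - 1)%nat ltac:(lia)) as [k [Hk [Hk2 Hk3]]]. exists k. split; [lia|split; auto].
           destruct (Nat.eqb_spec k K); try lia. destruct (Nat.ltb_spec (bet k) p); lia.
Qed.

Lemma sorted_scale (a : nat -> V2) n (f : nat -> R) : sorted a n -> (forall b, (b < n)%nat -> f b > 0) ->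
  sorted (fun b => vscale (f b) (a b)) n.
Proof.
  intros [H1 H2] Hf. split.
  - intros b Hb. specialize (H1 b Hb). specialize (Hf b Hb). destruct (a b); unfold upper, vscale in *; simpl in *.
    destruct H1 as [|[]]; [left; nra|right; split; nra].
  - intros b b' Hb Hb'. rewrite cross_scal_l, cross_scal_r. specialize (H2 b b' Hb Hb').
    assert (f b > 0) by (apply Hf; lia). assert (f b' > 0) by (apply Hf; lia).
    apply Rlt_gt. repeat apply Rmult_lt_0_compat; auto.
Qed.

(** * A polygonal seminorm dominating N *)

Lemma cone_coords p q y : cross p q <> 0 ->
  y = vadd (vscale (cross y q / cross p q) p) (vscale (cross p y / cross p q) q).
Proof. intros H. destruct y, p, q. unfold vadd, vscale, cross in *; simpl in *. f_equal; field; auto. Qed.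

Lemma Rabs_comb_same_sign a b u w : 0 <= a -> 0 <= b -> u * w >= 0 ->
  Rabs (a * u + b * w) = a * Rabs u + b * Rabs w.
Proof.
  intros Ha Hb Huw. destruct (Rle_dec 0 u); destruct (Rle_dec 0 w).
  - rewrite !Rabs_right; nra.
  - assert (u = 0) by nra. subst. rewrite Rabs_R0, !Rabs_left1 by nra. ring.
  - assert (w = 0) by nra. subst. rewrite Rabs_R0, !Rabs_left1 by nra. ring.
  - rewrite !Rabs_left1; nra.
Qed.

Section PolygonalGauge.
Variable N : V2 -> R.
Hypothesis HN : seminorm N.

(* For N-unit vectors p, q, r turning counterclockwise, q lies outside the chord pr
   (the unit ball of N is convex). *)
Lemma unit_vectors_convex p q r : N p = 1 -> N q = 1 -> N r = 1 ->
  0 <= cross p q -> 0 <= cross q r -> cross p r <= cross q r + cross p q.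
Proof.
  intros Np Nq Nr Hpq Hqr.
  destruct (Rle_dec (cross p r) 0) as [|Hpr]; [lra|apply Rnot_le_lt in Hpr].
  assert (E : vscale (cross p r) q = vadd (vscale (cross q r) p) (vscale (cross p q) r))
    by (destruct p, q, r; unfold vscale, vadd, cross; simpl; f_equal; ring).
  assert (HH : N (vscale (cross p r) q) <= cross q r + cross p q).
  { rewrite E. eapply Rle_trans; [apply sn_tri; auto|]. rewrite !sn_hom, Np, Nr, !Rabs_right by (auto || lra). lra. }
  rewrite sn_hom, Nq, Rabs_right in HH by (auto || lra). lra.
Qed.

Variable c : nat -> V2.
Variable n : nat.
Hypothesis Hs : sorted c n.
Hypothesis Hn2 : (2 <= n)%nat.
Hypothesis Hnorm : forall b, (b < n)%nat -> N (c b) = 1.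

Lemma c_cross_ge b j : (b <= j)%nat -> (j < n)%nat -> cross (c b) (c j) >= 0.
Proof. intros. destruct (Nat.eq_dec b j); [subst; rewrite cross_self; lra|left; apply Hs; lia]. Qed.
Lemma c_cross_le b j : (j <= b)%nat -> (b < n)%nat -> cross (c b) (c j) <= 0.
Proof. intros. rewrite cross_anti. assert (cross (c j) (c b) >= 0) by (apply c_cross_ge; lia). lra. Qed.
Lemma c_cross_neg b j : (j < b)%nat -> (b < n)%nat -> cross (c b) (c j) < 0.
Proof. intros. rewrite cross_anti. assert (cross (c j) (c b) > 0) by (apply Hs; lia). lra. Qed.

(* The vertices -c_(n-1), c_0, ..., c_(n-1), -c_0 of the upper half of the
   symmetric polygon with vertices +-c_b, in counterclockwise order. *)
Definition hv (t : nat) : V2 :=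
  if Nat.eqb t 0 then vopp (c (n - 1)) else if Nat.leb t n then c (t - 1) else vopp (c 0).

Lemma hv_0 : hv 0 = vopp (c (n - 1)). Proof. reflexivity. Qed.
Lemma hv_mid t : (1 <= t)%nat -> (t <= n)%nat -> hv t = c (t - 1).
Proof. intros. unfold hv. destruct (Nat.eqb_spec t 0); try lia. destruct (Nat.leb_spec t n); lia || auto. Qed.
Lemma hv_last : hv (S n) = vopp (c 0).
Proof. unfold hv. destruct (Nat.eqb_spec (S n) 0); try lia. destruct (Nat.leb_spec (S n) n); lia || auto. Qed.
Lemma hv_succ b : (b < n)%nat -> hv (S b) = c b.
Proof. intros. rewrite hv_mid by lia. f_equal; lia. Qed.

Lemma hv_norm t : (t <= S n)%nat -> N (hv t) = 1.
Proof.
  intros. destruct (Nat.eq_dec t 0); [subst; rewrite hv_0, sn_opp by auto; apply Hnorm; lia|].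
  destruct (Nat.eq_dec t (S n)); [subst; rewrite hv_last, sn_opp by auto; apply Hnorm; lia|].
  rewrite hv_mid by lia. apply Hnorm; lia.
Qed.

Definition hv_turn t := cross (hv t) (hv (S t)).

Lemma hv_turn_pos t : (t <= n)%nat -> hv_turn t > 0.
Proof.
  intros Ht. unfold hv_turn. assert (cross (c (n - 1)) (c 0) < 0) by (apply c_cross_neg; lia).
  destruct (Nat.eq_dec t 0); [subst; rewrite hv_0, hv_succ, cross_opp_l by lia; lra|].
  destruct (Nat.eq_dec t n); [subst; rewrite hv_last, hv_mid, cross_opp_r by lia; lra|].
  rewrite !hv_mid by lia. apply Hs; lia.
Qed.

(* [edge_dual t] is the functional equal to 1 on the polygon edge [hv t, hv (S t)]. *)
Definition edge_dual t := vscale (/ hv_turn t) (vsub (hv t) (hv (S t))).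

Lemma edge_dual_next t : (t <= n)%nat -> cross (edge_dual t) (hv (S t)) = 1.
Proof.
  intros Ht. unfold edge_dual. rewrite cross_scal_l, cross_sub_l, cross_self.
  pose proof (hv_turn_pos t Ht). unfold hv_turn in *. field. lra.
Qed.
Lemma edge_dual_cur t : (t <= n)%nat -> cross (edge_dual t) (hv t) = 1.
Proof.
  intros Ht. unfold edge_dual. rewrite cross_scal_l, cross_sub_l, cross_self.
  pose proof (hv_turn_pos t Ht). unfold hv_turn in *. rewrite (cross_anti (hv (S t))). field. lra.
Qed.

Lemma edge_dual_0n : edge_dual 0 = vopp (edge_dual n).
Proof.
  assert (hv_turn 0 = hv_turn n) by (unfold hv_turn; rewrite hv_0, hv_last, hv_succ, hv_mid, cross_opp_l, cross_opp_r by lia; ring).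
  unfold edge_dual. rewrite H, hv_0, hv_last, hv_succ, hv_mid by lia.
  destruct (c (n - 1)%nat) as [x y], (c 0%nat) as [z w]. unfold vopp, vscale, vsub; simpl. f_equal; ring.
Qed.

Definition jump b := vsub (edge_dual (S b)) (edge_dual b).

Lemma jump_nonneg_multiple b : (b < n)%nat -> exists g, g >= 0 /\ jump b = vscale g (c b).
Proof.
  intros Hb.
  assert (Hpar : cross (c b) (jump b) = 0).
  { unfold jump. rewrite cross_sub_r, (cross_anti _ (edge_dual (S b))), (cross_anti _ (edge_dual b)).
    rewrite <- (hv_succ b Hb), edge_dual_cur, edge_dual_next by lia. ring. }
  destruct (cross_par (c b) (jump b) Hpar (upper_nz _ (proj1 Hs b Hb))) as [g Hg].
  exists g. split; auto.
  assert (Hpos : cross (jump b) (hv (S (S b))) >= 0).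
  { unfold jump. rewrite cross_sub_l, edge_dual_next by lia. unfold edge_dual.
    rewrite cross_scal_l, cross_sub_l.
    pose proof (hv_turn_pos b ltac:(lia)) as K0. pose proof (hv_turn_pos (S b) ltac:(lia)) as K1. unfold hv_turn in *.
    pose proof (unit_vectors_convex (hv b) (hv (S b)) (hv (S (S b)))) as Hconv.
    rewrite !hv_norm in Hconv by lia.
    assert (/ cross (hv b) (hv (S b)) * (cross (hv b) (hv (S (S b))) - cross (hv (S b)) (hv (S (S b)))) <= 1).
    { apply (Rmult_le_reg_l (cross (hv b) (hv (S b)))); auto. field_simplify; lra. }
    lra. }
  rewrite Hg, cross_scal_l, <- (hv_succ b Hb) in Hpos. pose proof (hv_turn_pos (S b) ltac:(lia)). unfold hv_turn in *.
  destruct (Rle_dec 0 g); [lra|]. nra.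
Qed.

(* The gauge of the polygon with vertices +-c_b. *)
Definition gauge x := / 2 * rsum (fun b => Rabs (cross (jump b) x)) n.

Lemma gauge_scal t x : gauge (vscale t x) = Rabs t * gauge x.
Proof.
  unfold gauge. rewrite (rsum_ext _ (fun b => Rabs t * Rabs (cross (jump b) x))).
  - rewrite rsum_scal. ring.
  - intros. rewrite cross_scal_r, Rabs_mult. auto.
Qed.

Lemma gauge_opp x : gauge (vopp x) = gauge x.
Proof. unfold vopp. rewrite gauge_scal, Rabs_left by lra. ring. Qed.

Lemma gauge_nonneg x : 0 <= gauge x.
Proof. unfold gauge. apply Rmult_le_pos; [lra|]. apply rsum_nonneg. intros; apply Rabs_pos. Qed.

(* The gauge equals 1 on every c_k: the signed jumps telescope on both sides of k. *)
Lemma gauge_on_directions k : (k < n)%nat -> gauge (c k) = 1.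
Proof.
  intros Hk. unfold gauge.
  set (f := fun t => cross (edge_dual t) (c k)).
  rewrite (rsum_ext _ (fun b => (if Nat.leb b k then 1 else -1) * (f (S b) - f b))).
  2:{ intros b Hb. destruct (jump_nonneg_multiple b Hb) as [g [Hg E]]. unfold f.
      rewrite <- cross_sub_l. fold (jump b). rewrite E, cross_scal_l.
      destruct (Nat.leb_spec b k).
      - pose proof (c_cross_ge b k H Hk). rewrite Rabs_right by nra. ring.
      - pose proof (c_cross_le b k ltac:(lia) Hb). rewrite Rabs_left1 by nra. ring. }
  replace n with (S k + (n - S k))%nat at 1 by lia. rewrite rsum_split.
  rewrite (rsum_ext _ (fun b => f (S b) - f b)) by (intros b Hb; destruct (Nat.leb_spec b k); lia || ring).
  rewrite rsum_telescope.
  rewrite (rsum_ext _ (fun i => - (f (S k + S i)%nat - f (S k + i)%nat))).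
  2:{ intros i Hi. destruct (Nat.leb_spec (S k + i) k); try lia. replace (S k + S i)%nat with (S (S k + i)) by lia. ring. }
  rewrite rsum_opp, (rsum_telescope (fun t => f (S k + t)%nat)), Nat.add_0_r.
  replace (S k + (n - S k))%nat with n by lia. unfold f.
  rewrite edge_dual_0n, cross_opp_l, <- (hv_succ k Hk), edge_dual_cur by lia. field.
Qed.

Lemma gauge_hv t : (t <= S n)%nat -> gauge (hv t) = 1.
Proof.
  intros. destruct (Nat.eq_dec t 0); [subst; rewrite hv_0, gauge_opp; apply gauge_on_directions; lia|].
  destruct (Nat.eq_dec t (S n)); [subst; rewrite hv_last, gauge_opp; apply gauge_on_directions; lia|].
  rewrite hv_mid by lia. apply gauge_on_directions; lia.
Qed.

Lemma hv_sign t b : (t <= n)%nat -> (b < n)%nat -> cross (c b) (hv t) * cross (c b) (hv (S t)) >= 0.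
Proof.
  intros Ht Hb. pose proof (c_cross_ge b (n - 1) ltac:(lia) ltac:(lia)). pose proof (c_cross_le b 0 ltac:(lia) Hb).
  destruct (Nat.eq_dec t 0); [subst; rewrite hv_0, cross_opp_r, hv_succ by lia; nra|].
  destruct (Nat.eq_dec t n); [subst; rewrite hv_last, cross_opp_r, hv_mid by lia; nra|].
  rewrite !hv_mid by lia. replace (S t - 1)%nat with t by lia.
  destruct (Nat.le_gt_cases b (t - 1)).
  - pose proof (c_cross_ge b (t - 1) ltac:(lia) ltac:(lia)). pose proof (c_cross_ge b t ltac:(lia) ltac:(lia)). nra.
  - pose proof (c_cross_le b (t - 1) ltac:(lia) ltac:(lia)). pose proof (c_cross_le b t ltac:(lia) ltac:(lia)). nra.
Qed.

Lemma gauge_cone t a b : (t <= n)%nat -> 0 <= a -> 0 <= b ->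
  gauge (vadd (vscale a (hv t)) (vscale b (hv (S t)))) = a + b.
Proof.
  intros Ht Ha Hb. transitivity (a * gauge (hv t) + b * gauge (hv (S t))).
  2:{ rewrite !gauge_hv by lia. ring. }
  unfold gauge. rewrite (rsum_ext _ (fun i => a * Rabs (cross (jump i) (hv t)) + b * Rabs (cross (jump i) (hv (S t))))).
  - rewrite rsum_plus, !rsum_scal. ring.
  - intros i Hi. rewrite cross_add_r, !cross_scal_r. apply Rabs_comb_same_sign; auto.
    destruct (jump_nonneg_multiple i Hi) as [g [Hg E]]. rewrite E, !cross_scal_l.
    pose proof (hv_sign t i Ht Hi). assert (0 <= g * g) by nra. nra.
Qed.

Lemma cone_exists x : upper x -> exists t, (t <= n)%nat /\ cross (hv t) x >= 0 /\ cross x (hv (S t)) >= 0.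
Proof.
  intros Hx. destruct (sorted_split c n x Hs Hx) as [m [Hm [H1 H2]]]. exists m. split; auto.
  rewrite (cross_anti x).
  destruct (Nat.eq_dec m 0).
  - subst. rewrite hv_0, cross_opp_l, hv_succ by lia.
    assert (cross (c (n - 1)) x < 0) by (apply H2; lia). assert (cross (c 0) x < 0) by (apply H2; lia). lra.
  - rewrite hv_mid by lia. split; [apply H1; lia|].
    destruct (Nat.eq_dec m n).
    + subst. rewrite hv_last, cross_opp_l. assert (cross (c 0) x >= 0) by (apply H1; lia). lra.
    + rewrite hv_succ by lia. assert (cross (c m) x < 0) by (apply H2; lia). lra.
Qed.

(* The gauge dominates N: the polygon with vertices +-c_b lies in the N-unit ball. *)
Lemma gauge_dominates x : N x <= gauge x.
Proof.
  assert (Hup : forall y, upper y -> N y <= gauge y).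
  { intros y Hy. destruct (cone_exists y Hy) as [t [Ht [H1 H2]]].
    pose proof (hv_turn_pos t Ht) as K. unfold hv_turn in K.
    pose proof (cone_coords (hv t) (hv (S t)) y ltac:(lra)) as E.
    assert (0 <= cross y (hv (S t)) / cross (hv t) (hv (S t)))
      by (unfold Rdiv; apply Rmult_le_pos; [lra|left; apply Rinv_0_lt_compat; lra]).
    assert (0 <= cross (hv t) y / cross (hv t) (hv (S t)))
      by (unfold Rdiv; apply Rmult_le_pos; [lra|left; apply Rinv_0_lt_compat; lra]).
    rewrite E at 2. rewrite gauge_cone by auto.
    rewrite E at 1. eapply Rle_trans; [apply sn_tri; auto|].
    rewrite !sn_hom, !hv_norm, !Rabs_right by (auto || lia || lra). lra. }
  destruct (classic (x = v0)) as [Hz|Hz]; [subst; rewrite sn_zero by auto; apply gauge_nonneg|].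
  destruct (upper_or_opp x Hz) as [H|H]; auto.
  rewrite <- sn_opp, <- gauge_opp by auto. auto.
Qed.

End PolygonalGauge.

Lemma dominating_polygonal_seminorm N (HN : seminorm N) (Hpos : forall x, x <> v0 -> 0 < N x)
  K (U : nat -> V2) :
  exists n (G : nat -> V2),
    (forall x, N x <= / 2 * rsum (fun b => Rabs (cross (G b) x)) n) /\
    (forall k, (k < K)%nat -> / 2 * rsum (fun b => Rabs (cross (G b) (U k))) n = N (U k)).
Proof.
  set (U' := fun k => match k with 0 => (1, 0) | 1 => (0, 1) | S (S k) => U k end).
  destruct (sort_directions (S (S K)) U') as [n [a [bet [lam [Hs [Hrep _]]]]]].
  assert (Hax : forall k, (k < 2)%nat -> (bet k < n)%nat /\ U' k = vscale (lam k) (a (bet k)))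
    by (intros k Hk; apply Hrep; [lia|destruct k as [|[|]]; simpl; try lia; intro E; inversion E; lra]).
  assert (Hn2 : (2 <= n)%nat).
  { destruct (Hax 0%nat) as [Hb0 E0]; [lia|]. destruct (Hax 1%nat) as [Hb1 E1]; [lia|].
    assert (bet 0%nat <> bet 1%nat); [|lia].
    intro E. assert (cross (U' 0%nat) (U' 1%nat) = 0) by (rewrite E0, E1, E, cross_scal_l, cross_scal_r, cross_self; ring).
    unfold U', cross in H; simpl in H. lra. }
  assert (Hapos : forall b, (b < n)%nat -> N (a b) > 0) by (intros b Hb; apply Hpos, upper_nz, Hs; auto).
  set (c := fun b => vscale (/ N (a b)) (a b)).
  assert (Hcs : sorted c n) by (apply sorted_scale; auto; intros; apply Rlt_gt, Rinv_0_lt_compat, Hapos; auto).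
  assert (Hcn : forall b, (b < n)%nat -> N (c b) = 1).
  { intros b Hb. unfold c. specialize (Hapos b Hb). rewrite sn_hom, Rabs_right by (auto; left; apply Rinv_0_lt_compat; lra). field. lra. }
  exists n, (jump c n). split.
  - intros x. apply (gauge_dominates N HN c n Hcs Hn2 Hcn).
  - intros k Hk. fold (gauge c n (U k)). destruct (classic (U k = v0)) as [Hz|Hz].
    + rewrite Hz. replace v0 with (vscale 0 v0) by (unfold vscale, v0; simpl; f_equal; ring).
      rewrite gauge_scal, sn_hom, Rabs_R0 by auto. ring.
    + destruct (Hrep (S (S k)) ltac:(lia) Hz) as [Hb E]. simpl in E. rewrite E.
      replace (a (bet (S (S k)))) with (vscale (N (a (bet (S (S k))))) (c (bet (S (S k))))).
      2:{ unfold c. specialize (Hapos _ Hb). destruct (a (bet (S (S k)))); unfold vscale; simpl; f_equal; field; lra. }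
      rewrite vscale_vscale, gauge_scal, sn_hom, (gauge_on_directions N HN c n Hcs Hn2 Hcn), Hcn by auto. auto.
Qed.

(** * Perimeter of a convex polygon inside a zonotope *)

Definition in_zonotope (z0 : V2) (U : nat -> V2) (K : nat) (p : V2) : Prop :=
  exists t : nat -> R, (forall k, (k < K)%nat -> 0 <= t k <= 1) /\
    p = vadd z0 (vsum (fun k => vscale (t k) (U k)) K).

Lemma zonotope_width d z0 U K p q : in_zonotope z0 U K p -> in_zonotope z0 U K q ->
  cross d p - cross d q <= rsum (fun k => Rabs (cross d (U k))) K.
Proof.
  intros [t [Ht Ep]] [s [Hs Eq]]. subst p q. rewrite !cross_add_r, !cross_vsum_r.
  rewrite (rsum_ext (fun i => cross d (vscale (t i) (U i))) (fun i => t i * cross d (U i))) by (intros; apply cross_scal_r).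
  rewrite (rsum_ext (fun i => cross d (vscale (s i) (U i))) (fun i => s i * cross d (U i))) by (intros; apply cross_scal_r).
  assert (rsum (fun i => t i * cross d (U i)) K - rsum (fun i => s i * cross d (U i)) K
          <= rsum (fun k => Rabs (cross d (U k))) K); [|lra].
  unfold Rminus. rewrite <- rsum_opp, <- rsum_plus. apply rsum_le. intros i Hi. specialize (Ht i Hi). specialize (Hs i Hi).
  unfold Rabs; destruct Rcase_abs; nra.
Qed.

(* Monotonicity of perimeter, first for norms and counterclockwise polygons: the
   polygonal seminorm of [dominating_polygonal_seminorm] reduces it to one
   functional at a time, handled by [edge_variation_le_width]. *)
Lemma perimeter_in_zonotope_norm N (HN : seminorm N) (Hpos : forall x, x <> v0 -> 0 < N x)
  v l (Hd : forall i j, (i < l)%nat -> (j < l)%nat -> v i = v j -> i = j)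
  (He : forall i, (i < l)%nat -> ~ conv (fun p => exists j, (j < l)%nat /\ j <> i /\ p = v j) (v i))
  (Hc : forall i j, (i < l)%nat -> (j < l)%nat -> 0 <= cross (vsub (v (S i mod l)) (v i)) (vsub (v j) (v i)))
  K U z0 (Hv : forall i, (i < l)%nat -> in_zonotope z0 U K (v i)) :
  polygon_perimeter N v l <= 2 * rsum (fun k => N (U k)) K.
Proof.
  destruct (dominating_polygonal_seminorm N HN Hpos K U) as [n [G [Hdom HU]]].
  set (edge := fun i => vsub (v (S i mod l)) (v i)).
  assert (Hedges : forall b, (b < n)%nat ->
            rsum (fun i => Rabs (cross (G b) (edge i))) l <= 2 * rsum (fun k => Rabs (cross (G b) (U k))) K).
  { intros b Hb. apply edge_variation_le_width; auto.
    - apply rsum_nonneg; intros; apply Rabs_pos.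
    - intros i j Hi Hj. apply (zonotope_width _ z0 U K); auto. }
  unfold polygon_perimeter. fold edge.
  apply Rle_trans with (rsum (fun i => / 2 * rsum (fun b => Rabs (cross (G b) (edge i))) n) l);
    [apply rsum_le; auto|].
  rewrite rsum_scal, (rsum_exchange (fun i b => Rabs (cross (G b) (edge i)))).
  apply Rle_trans with (/ 2 * rsum (fun b => 2 * rsum (fun k => Rabs (cross (G b) (U k))) K) n);
    [apply Rmult_le_compat_l; [lra|apply rsum_le; auto]|].
  rewrite rsum_scal, (rsum_exchange (fun b k => Rabs (cross (G b) (U k)))).
  assert (E : rsum (fun k => rsum (fun b => Rabs (cross (G b) (U k))) n) K = 2 * rsum (fun k => N (U k)) K).
  { rewrite <- rsum_scal. apply rsum_ext. intros k Hk. rewrite <- (HU k Hk). field. }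
  rewrite E. lra.
Qed.

Lemma le_epsilon_slack a b C : 0 <= C -> (forall e, e > 0 -> a <= b + e * C) -> a <= b.
Proof.
  intros HC H. destruct (Rle_dec a b) as [|Hn]; auto. apply Rnot_le_lt in Hn.
  set (e := (a - b) / (C + 1)). assert (He : e > 0) by (unfold e; apply Rdiv_lt_0_compat; lra).
  specialize (H e He). assert (e * C < a - b); [|lra].
  unfold e. apply (Rmult_lt_reg_r (C + 1)); [lra|]. unfold Rdiv.
  replace ((a - b) * / (C + 1) * C * (C + 1)) with ((a - b) * C * ((C + 1) * / (C + 1))) by ring.
  rewrite Rinv_r by lra. nra.
Qed.

Definition norm1 (x : V2) : R := Rabs (fst x) + Rabs (snd x).

Lemma norm1_nonneg x : 0 <= norm1 x.
Proof. unfold norm1. pose proof (Rabs_pos (fst x)). pose proof (Rabs_pos (snd x)). lra. Qed.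

Definition perturb (N : V2 -> R) (e : R) (x : V2) := N x + e * norm1 x.

Lemma perturb_seminorm N e : seminorm N -> 0 <= e -> seminorm (perturb N e).
Proof.
  intros HN He. split.
  - intros [a1 a2] [b1 b2]. unfold perturb, norm1. pose proof (sn_tri N HN (a1, a2) (b1, b2)).
    unfold vadd in *; simpl in *.
    pose proof (Rabs_triang a1 b1). pose proof (Rabs_triang a2 b2). nra.
  - intros t [a1 a2]. unfold perturb, norm1. rewrite sn_hom by auto. unfold vscale; simpl. rewrite !Rabs_mult. ring.
Qed.

Lemma perturb_pos N e : seminorm N -> e > 0 -> forall x, x <> v0 -> 0 < perturb N e x.
Proof.
  intros HN He [p q] Hx. unfold perturb, norm1. pose proof (sn_nonneg N HN (p, q)). simpl.
  assert (p <> 0 \/ q <> 0) by (destruct (Req_dec p 0); destruct (Req_dec q 0); subst; auto).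
  pose proof (Rabs_pos p). pose proof (Rabs_pos q).
  destruct H0; [pose proof (Rabs_pos_lt p H0)|pose proof (Rabs_pos_lt q H0)]; nra.
Qed.

Lemma perimeter_in_zonotope_ccw N (HN : seminorm N) v l
  (Hd : forall i j, (i < l)%nat -> (j < l)%nat -> v i = v j -> i = j)
  (He : forall i, (i < l)%nat -> ~ conv (fun p => exists j, (j < l)%nat /\ j <> i /\ p = v j) (v i))
  (Hc : forall i j, (i < l)%nat -> (j < l)%nat -> 0 <= cross (vsub (v (S i mod l)) (v i)) (vsub (v j) (v i)))
  K U z0 (Hv : forall i, (i < l)%nat -> in_zonotope z0 U K (v i)) :
  polygon_perimeter N v l <= 2 * rsum (fun k => N (U k)) K.
Proof.
  apply (le_epsilon_slack _ _ (2 * rsum (fun k => norm1 (U k)) K)).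
  - apply Rmult_le_pos; [lra|]. apply rsum_nonneg. intros; apply norm1_nonneg.
  - intros e He0.
    pose proof (perimeter_in_zonotope_norm (perturb N e) (perturb_seminorm N e HN ltac:(lra))
                  (perturb_pos N e HN He0) v l Hd He Hc K U z0 Hv) as H.
    unfold polygon_perimeter, perturb in *. rewrite !rsum_plus, !rsum_scal in H.
    assert (0 <= rsum (fun i => norm1 (vsub (v (S i mod l)) (v i))) l)
      by (apply rsum_nonneg; intros; apply norm1_nonneg).
    nra.
Qed.

(* The reflection (x, y) |-> (x, -y) reverses orientation. *)
Definition reflect (x : V2) : V2 := (fst x, - snd x).

Lemma reflect_involutive x : reflect (reflect x) = x.
Proof. destruct x; unfold reflect; simpl; f_equal; ring. Qed.
Lemma reflect_sub a b : reflect (vsub a b) = vsub (reflect a) (reflect b).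
Proof. destruct a, b; unfold reflect, vsub; simpl; f_equal; ring. Qed.
Lemma reflect_add a b : reflect (vadd a b) = vadd (reflect a) (reflect b).
Proof. destruct a, b; unfold reflect, vadd; simpl; f_equal; ring. Qed.
Lemma reflect_scal t a : reflect (vscale t a) = vscale t (reflect a).
Proof. destruct a; unfold reflect, vscale; simpl; f_equal; ring. Qed.
Lemma reflect_vsum f m : reflect (vsum f m) = vsum (fun i => reflect (f i)) m.
Proof. induction m; simpl; [unfold reflect, v0; simpl; f_equal; ring|]. rewrite reflect_add, IHm; auto. Qed.
Lemma reflect_cross a b : cross (reflect a) (reflect b) = - cross a b.
Proof. destruct a, b; unfold reflect, cross; simpl; ring. Qed.

Lemma conv_reflect S p : conv S p -> conv (fun q => exists r, S r /\ q = reflect r) (reflect p).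
Proof.
  intros [n [w [q [H1 [H2 H3]]]]]. exists n, w, (fun i => reflect (q i)). split; [|split]; auto.
  - intros i Hi. destruct (H1 i Hi). split; eauto.
  - subst. rewrite reflect_vsum. apply vsum_ext. intros. apply reflect_scal.
Qed.

Lemma perimeter_in_zonotope N (HN : seminorm N) v l (Hp : polygon_vertices v l) K U z0
  (Hv : forall i, (i < l)%nat -> in_zonotope z0 U K (v i)) :
  polygon_perimeter N v l <= 2 * rsum (fun k => N (U k)) K.
Proof.
  destruct Hp as [Hd [He [Hc|Hc]]]; [eapply perimeter_in_zonotope_ccw; eauto|].
  set (N' := fun x => N (reflect x)).
  assert (HN' : seminorm N').
  { split; intros; unfold N'; [rewrite reflect_add|rewrite reflect_scal]; apply HN. }
  assert (E1 : polygon_perimeter N' (fun i => reflect (v i)) l = polygon_perimeter N v l).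
  { unfold polygon_perimeter, N'. apply rsum_ext. intros. rewrite <- reflect_sub, reflect_involutive. auto. }
  assert (E2 : rsum (fun k => N' (reflect (U k))) K = rsum (fun k => N (U k)) K).
  { apply rsum_ext. intros. unfold N'. rewrite reflect_involutive. auto. }
  rewrite <- E1, <- E2. apply (perimeter_in_zonotope_ccw N' HN' _ l) with (z0 := reflect z0).
  - intros i j Hi Hj E. apply Hd; auto. rewrite <- (reflect_involutive (v i)), <- (reflect_involutive (v j)), E. auto.
  - intros i Hi Hconv. apply (He i Hi). apply conv_reflect in Hconv. rewrite reflect_involutive in Hconv.
    eapply conv_mono; [|exact Hconv]. intros q [r [[j [Hj [Hji Er]]] Eq]]. subst.
    exists j. split; auto. split; auto. apply reflect_involutive.
  - intros i j Hi Hj. rewrite <- !reflect_sub, reflect_cross. specialize (Hc i j Hi Hj). lra.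
  - intros i Hi. destruct (Hv i Hi) as [t [Ht E]]. exists t. split; auto.
    rewrite E, reflect_add, reflect_vsum. f_equal. apply vsum_ext. intros. apply reflect_scal.
Qed.

(** * The zonotope generated by finitely many vectors is a convex polygon *)

Section StrictTurns.
Variable v : nat -> V2.
Variable l : nat.
Hypothesis Hl : (3 <= l)%nat.
Hypothesis Hturn : forall i j, (i < l)%nat -> (j < l)%nat -> j <> i -> j <> (S i mod l)%nat ->
  cross (vsub (v (S i mod l)) (v i)) (vsub (v j) (v i)) > 0.

Lemma succ_mod_neq i : (i < l)%nat -> (S i mod l <> i)%nat.
Proof. intros Hi. replace (S i) with (i + 1)%nat by lia. destruct (add_mod_cases l i 1); lia. Qed.

Lemma strict_turns_ccw i j : (i < l)%nat -> (j < l)%nat ->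
  0 <= cross (vsub (v (S i mod l)) (v i)) (vsub (v j) (v i)).
Proof.
  intros Hi Hj. destruct (Nat.eq_dec j i); [subst; unfold cross, vsub; simpl; nra|].
  destruct (Nat.eq_dec j (S i mod l)); [subst; rewrite cross_self; lra|left; apply Hturn; auto].
Qed.

Lemma strict_turns_distinct i j : (i < l)%nat -> (j < l)%nat -> v i = v j -> i = j.
Proof.
  intros Hi Hj E. destruct (Nat.eq_dec i j); auto. exfalso.
  destruct (Nat.eq_dec j (S i mod l)).
  - (* a third vertex k would see a degenerate edge *)
    assert (exists k, (k < 3)%nat /\ k <> i /\ k <> j) as [k [Hk [Hki Hkj]]]
      by (destruct (Nat.eq_dec i 0); destruct (Nat.eq_dec j 0); destruct (Nat.eq_dec i 1); destruct (Nat.eq_dec j 1);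
          first [exists 2%nat; lia | exists 1%nat; lia | exists 0%nat; lia]).
    specialize (Hturn i k Hi ltac:(lia) Hki ltac:(congruence)).
    rewrite <- e, <- E in Hturn. unfold cross, vsub in Hturn; simpl in Hturn. lra.
  - specialize (Hturn i j Hi Hj ltac:(lia) n0). rewrite E in Hturn. unfold cross, vsub in Hturn; simpl in Hturn. lra.
Qed.

(* Vertex i is strictly separated from the others by the sum of the two
   supporting functionals of its incident edges. *)
Lemma strict_turns_extreme i : (i < l)%nat ->
  ~ conv (fun p => exists j, (j < l)%nat /\ j <> i /\ p = v j) (v i).
Proof.
  intros Hi Hconv.
  set (p := ((i + (l - 1)) mod l)%nat).
  assert (Hp : (p < l)%nat) by (apply Nat.mod_upper_bound; lia).
  assert (Hpi : (S p mod l = i)%nat).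
  { unfold p. rewrite (mod_S l i (l - 1)) by lia. replace (i + S (l - 1))%nat with (i + l)%nat by lia. apply mod_add_l; auto. }
  assert (Hpne : p <> i) by (intro E; rewrite E in Hpi; apply (succ_mod_neq i Hi); auto).
  assert (Hpsi : p <> (S i mod l)%nat).
  { intro E. unfold p in E. replace (S i) with (i + 1)%nat in E by lia. destruct (add_mod_cases l i (l - 1)); destruct (add_mod_cases l i 1); lia. }
  set (e1 := vsub (v i) (v p)). set (e2 := vsub (v (S i mod l)) (v i)).
  assert (Haff : forall q, cross e1 (vsub q (v p)) + cross e2 (vsub q (v i)) =
                           cross (vadd e1 e2) q + (- cross e1 (v p) - cross e2 (v i))).
  { intros q. rewrite !cross_sub_r. destruct q, e1, e2; unfold cross, vadd; simpl. ring. }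
  assert (Hsep : forall q, (exists j, (j < l)%nat /\ j <> i /\ q = v j) ->
             cross (vadd e1 e2) q + (- cross e1 (v p) - cross e2 (v i)) > 0).
  { intros q [j [Hj [Hji Eq]]]. subst q. rewrite <- Haff.
    pose proof (strict_turns_ccw p j Hp Hj) as A1. pose proof (strict_turns_ccw i j Hi Hj) as A2.
    rewrite Hpi in A1. fold e1 in A1. fold e2 in A2.
    destruct (Nat.eq_dec j p).
    - subst j. assert (cross e2 (vsub (v p) (v i)) > 0) by (apply Hturn; auto). lra.
    - assert (cross e1 (vsub (v j) (v p)) > 0) by (unfold e1; rewrite <- Hpi at 1; apply Hturn; auto; rewrite Hpi; auto).
      lra. }
  pose proof (conv_affine_pos _ _ _ (v i) Hsep Hconv) as CA.
  rewrite <- Haff in CA. unfold e1 in CA. rewrite cross_self, cross_sub_r in CA. lra.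
Qed.

Lemma polygon_vertices_of_strict_turns : polygon_vertices v l.
Proof.
  split; [exact strict_turns_distinct|split; [exact strict_turns_extreme|left; exact strict_turns_ccw]].
Qed.

End StrictTurns.

Lemma polygon_vertices_segment (v : nat -> V2) : v 0%nat <> v 1%nat -> polygon_vertices v 2.
Proof.
  intros Hne. split; [|split].
  - intros i j Hi Hj E. destruct i as [|[|]]; destruct j as [|[|]]; try lia; exfalso; apply Hne; auto.
  - intros i Hi Hc. assert (Hs : forall p, (exists j, (j < 2)%nat /\ j <> i /\ p = v j) -> p = v (1 - i)%nat).
    { intros p [j [Hj [Hji E]]]. subst. f_equal. lia. }
    apply (conv_mono _ _ _ Hs), conv_single in Hc.
    destruct i as [|[|]]; simpl in Hc; try lia; apply Hne; auto.
  - left. intros i j Hi Hj. destruct i as [|[|]]; destruct j as [|[|]]; try lia; simpl;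
      destruct (v 0%nat), (v 1%nat); unfold cross, vsub; simpl; nra.
Qed.

(* The boundary walk of the zonotope z + sum_b [0,1] d_b for sorted d_0..d_(n-1):
   vertex j (0 <= j < 2n) is z plus the sum of the d_b with b < j <= b + n,
   so the edges are d_0, ..., d_(n-1), -d_0, ..., -d_(n-1). *)
Section ZonotopeWalk.
Variable d : nat -> V2.
Variable n : nat.
Hypothesis Hs : sorted d n.
Hypothesis Hn : (1 <= n)%nat.
Variable z : V2.

Definition used j b : bool := andb (Nat.ltb b j) (Nat.leb j (b + n)).
Definition used_weight j b : R := if used j b then 1 else 0.
Definition zvertex j : V2 := vadd z (vsum (fun b => vscale (used_weight j b) (d b)) n).

Lemma used_lo j b : (j <= n)%nat -> (b < n)%nat -> used j b = Nat.ltb b j.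
Proof. intros. unfold used. destruct (Nat.leb_spec j (b + n)); try lia. destruct (Nat.ltb b j); auto. Qed.
Lemma used_hi j b : (n <= j)%nat -> (j < 2 * n)%nat -> (b < n)%nat -> used j b = Nat.leb (j - n) b.
Proof.
  intros. unfold used. destruct (Nat.ltb_spec b j); try lia.
  destruct (Nat.leb_spec j (b + n)); destruct (Nat.leb_spec (j - n) b); auto; lia.
Qed.

Lemma used_weight_01 j b : used_weight j b = 0 \/ used_weight j b = 1.
Proof. unfold used_weight. destruct (used j b); auto. Qed.

Lemma zvertex_diff a b : vsub (zvertex a) (zvertex b) = vsum (fun k => vscale (used_weight a k - used_weight b k) (d k)) n.
Proof.
  apply V2_cross_eq. intros e. unfold zvertex. rewrite cross_sub_r, !cross_add_r, !cross_vsum_r.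
  rewrite (rsum_ext (fun k => cross e (vscale (used_weight a k - used_weight b k) (d k)))
             (fun k => cross e (vscale (used_weight a k) (d k)) + - cross e (vscale (used_weight b k) (d k))))
    by (intros; rewrite !cross_scal_r; ring).
  rewrite rsum_plus, rsum_opp. ring.
Qed.

Lemma cross_zvertex i j e :
  cross e (vsub (zvertex j) (zvertex i)) = rsum (fun b => (used_weight j b - used_weight i b) * cross e (d b)) n.
Proof. rewrite zvertex_diff, cross_vsum_r. apply rsum_ext. intros. apply cross_scal_r. Qed.

Lemma zvertex_edge_lo i : (i < n)%nat -> vsub (zvertex (S i mod (2 * n))) (zvertex i) = d i.
Proof.
  intros Hi. rewrite Nat.mod_small by lia. rewrite zvertex_diff, (vsum_single _ n i Hi).
  - unfold used_weight. rewrite !used_lo by lia. destruct (Nat.ltb_spec i (S i)); destruct (Nat.ltb_spec i i); try lia.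
    destruct (d i); unfold vscale; simpl; f_equal; ring.
  - intros b Hb Hbi. unfold used_weight. rewrite !used_lo by lia.
    destruct (Nat.ltb_spec b (S i)); destruct (Nat.ltb_spec b i); try lia;
      destruct (d b); unfold vscale, v0; simpl; f_equal; ring.
Qed.

Lemma zvertex_edge_hi i : (n <= i)%nat -> (i < 2 * n)%nat ->
  vsub (zvertex (S i mod (2 * n))) (zvertex i) = vopp (d (i - n)).
Proof.
  intros Hi1 Hi2. rewrite zvertex_diff, (vsum_single _ n (i - n) ltac:(lia)).
  - unfold used_weight. destruct (Nat.eq_dec (S i) (2 * n)).
    + rewrite e, Nat.Div0.mod_same. rewrite used_lo, used_hi by lia.
      destruct (Nat.ltb_spec (i - n) 0); destruct (Nat.leb_spec (i - n) (i - n)); try lia.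
      destruct (d (i - n)); unfold vopp, vscale; simpl; f_equal; ring.
    + rewrite Nat.mod_small by lia. rewrite !used_hi by lia.
      destruct (Nat.leb_spec (S i - n) (i - n)); destruct (Nat.leb_spec (i - n) (i - n)); try lia.
      destruct (d (i - n)); unfold vopp, vscale; simpl; f_equal; ring.
  - intros b Hb Hbi. unfold used_weight. destruct (Nat.eq_dec (S i) (2 * n)).
    + rewrite e, Nat.Div0.mod_same. rewrite used_lo, used_hi by lia.
      destruct (Nat.ltb_spec b 0); destruct (Nat.leb_spec (i - n) b); try lia;
        destruct (d b); unfold vscale, v0; simpl; f_equal; ring.
    + rewrite Nat.mod_small by lia. rewrite !used_hi by lia.
      destruct (Nat.leb_spec (S i - n) b); destruct (Nat.leb_spec (i - n) b); try lia;
        destruct (d b); unfold vscale, v0; simpl; f_equal; ring.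
Qed.

Lemma d_cross_pos b j : (b < j)%nat -> (j < n)%nat -> cross (d b) (d j) > 0.
Proof. intros; apply Hs; auto. Qed.
Lemma d_cross_neg b j : (j < b)%nat -> (b < n)%nat -> cross (d b) (d j) < 0.
Proof. intros. rewrite cross_anti. assert (cross (d j) (d b) > 0) by (apply Hs; lia). lra. Qed.

Lemma zvertex_turn_lo i j : (2 <= n)%nat -> (i < n)%nat -> (j < 2 * n)%nat -> j <> i ->
  j <> (S i mod (2 * n))%nat -> cross (vsub (zvertex (S i mod (2 * n))) (zvertex i)) (vsub (zvertex j) (zvertex i)) > 0.
Proof.
  intros Hn2 Hin Hj Hji Hjs. rewrite zvertex_edge_lo, cross_zvertex by auto. rewrite Nat.mod_small in Hjs by lia.
  assert (Hwi : forall b, (b < n)%nat -> used_weight i b = if Nat.ltb b i then 1 else 0)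
    by (intros b Hb; unfold used_weight; rewrite used_lo by lia; auto).
  apply rsum_pos.
  - intros b Hb. rewrite Hwi by auto. destruct (Nat.ltb_spec b i).
    + pose proof (d_cross_neg i b H Hin). destruct (used_weight_01 j b) as [E|E]; rewrite E; nra.
    + destruct (Nat.eq_dec b i); [subst; rewrite cross_self; lra|].
      pose proof (d_cross_pos i b ltac:(lia) Hb). destruct (used_weight_01 j b) as [E|E]; rewrite E; nra.
  -
    assert (W : exists b, (b < n)%nat /\ (((b < i)%nat /\ used_weight j b = 0) \/ ((i < b)%nat /\ used_weight j b = 1))).
    { unfold used_weight. destruct (Nat.le_gt_cases j n).
      - destruct (Nat.lt_ge_cases j i).
        + exists j. split; [lia|]. left. split; auto. rewrite used_lo by lia. destruct (Nat.ltb_spec j j); lia || auto.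
        + exists (S i). split; [lia|]. right. split; [lia|]. rewrite used_lo by lia. destruct (Nat.ltb_spec (S i) j); lia || auto.
      - destruct (Nat.eq_dec i 0).
        + exists (n - 1)%nat. split; [lia|]. right. split; [lia|]. rewrite used_hi by lia. destruct (Nat.leb_spec (j - n) (n - 1)); lia || auto.
        + exists 0%nat. split; [lia|]. left. split; [lia|]. rewrite used_hi by lia. destruct (Nat.leb_spec (j - n) 0); lia || auto. }
    destruct W as [b [Hb [[Hb1 Hb2]|[Hb1 Hb2]]]]; exists b; split; auto; rewrite Hwi, Hb2 by auto.
    + destruct (Nat.ltb_spec b i); try lia. pose proof (d_cross_neg i b Hb1 Hin). lra.
    + destruct (Nat.ltb_spec b i); try lia. pose proof (d_cross_pos i b Hb1 Hb). lra.
Qed.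

Lemma zvertex_turn_hi i j : (2 <= n)%nat -> (n <= i)%nat -> (i < 2 * n)%nat -> (j < 2 * n)%nat -> j <> i ->
  j <> (S i mod (2 * n))%nat -> cross (vsub (zvertex (S i mod (2 * n))) (zvertex i)) (vsub (zvertex j) (zvertex i)) > 0.
Proof.
  intros Hn2 Hin Hi Hj Hji Hjs. rewrite zvertex_edge_hi, cross_zvertex by auto. set (c := (i - n)%nat).
  assert (Hwi : forall b, (b < n)%nat -> used_weight i b = if Nat.leb c b then 1 else 0)
    by (intros b Hb; unfold used_weight; rewrite used_hi by lia; auto).
  apply rsum_pos.
  - intros b Hb. rewrite Hwi, cross_opp_l by auto. destruct (Nat.leb_spec c b).
    + destruct (Nat.eq_dec b c); [subst b; rewrite cross_self; lra|].
      pose proof (d_cross_pos c b ltac:(lia) Hb). destruct (used_weight_01 j b) as [E|E]; rewrite E; nra.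
    + pose proof (d_cross_neg c b H ltac:(lia)). destruct (used_weight_01 j b) as [E|E]; rewrite E; nra.
  -
    assert (W : exists b, (b < n)%nat /\ (((b < c)%nat /\ used_weight j b = 1) \/ ((c < b)%nat /\ used_weight j b = 0))).
    { unfold used_weight. destruct (Nat.le_gt_cases j n).
      - destruct (Nat.eq_dec j 0).
        + subst j. assert (c < n - 1)%nat.
          { destruct (Nat.eq_dec i (2 * n - 1)); [|unfold c; lia].
            exfalso. apply Hjs. replace (S i) with (2 * n)%nat by lia. rewrite Nat.Div0.mod_same; lia. }
          exists (n - 1)%nat. split; [lia|]. right. split; [lia|]. rewrite used_lo by lia. destruct (Nat.ltb_spec (n - 1) 0); lia || auto.
        + destruct (Nat.eq_dec c 0).
          * exists (n - 1)%nat. split; [lia|]. right. split; [lia|]. rewrite used_lo by lia.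
            assert (j <> n) by (intro; subst; apply Hji; unfold c in e; lia).
            destruct (Nat.ltb_spec (n - 1) j); lia || auto.
          * exists 0%nat. split; [lia|]. left. split; [lia|]. rewrite used_lo by lia. destruct (Nat.ltb_spec 0 j); lia || auto.
      - assert (j - n <> c)%nat by (unfold c; lia).
        destruct (Nat.lt_ge_cases (j - n) c).
        + exists (j - n)%nat. split; [lia|]. left. split; [lia|]. rewrite used_hi by lia. destruct (Nat.leb_spec (j - n) (j - n)); lia || auto.
        + assert (j - n <> S c)%nat by (intro E; apply Hjs; rewrite Nat.mod_small; unfold c in E; lia).
          exists (S c). split; [lia|]. right. split; [lia|]. rewrite used_hi by lia. destruct (Nat.leb_spec (j - n) (S c)); lia || auto. }
    destruct W as [b [Hb [[Hb1 Hb2]|[Hb1 Hb2]]]]; exists b; split; auto; rewrite Hwi, Hb2, cross_opp_l by auto.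
    + destruct (Nat.leb_spec c b); try lia. pose proof (d_cross_neg c b Hb1 ltac:(lia)). lra.
    + destruct (Nat.leb_spec c b); try lia. pose proof (d_cross_pos c b Hb1 Hb). lra.
Qed.

Lemma zvertex_polygon : (2 <= n)%nat -> polygon_vertices zvertex (2 * n).
Proof.
  intros. apply polygon_vertices_of_strict_turns; [lia|]. intros i j Hi Hj.
  destruct (Nat.lt_ge_cases i n); [apply zvertex_turn_lo|apply zvertex_turn_hi]; auto.
Qed.

Lemma zvertex_perimeter N : seminorm N -> polygon_perimeter N zvertex (2 * n) = 2 * rsum (fun b => N (d b)) n.
Proof.
  intros HN. unfold polygon_perimeter. replace (2 * n)%nat with (n + n)%nat by lia.
  rewrite rsum_split, (rsum_ext _ (fun b => N (d b))).
  - rewrite (rsum_ext (fun i => N (vsub (zvertex (S (n + i) mod (n + n))) (zvertex (n + i)))) (fun b => N (d b))). ring.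
    intros i Hi. replace (n + n)%nat with (2 * n)%nat by lia. rewrite zvertex_edge_hi, sn_opp by (auto; lia). f_equal. f_equal. lia.
  - intros i Hi. replace (n + n)%nat with (2 * n)%nat by lia. rewrite zvertex_edge_lo by lia. auto.
Qed.

End ZonotopeWalk.

Lemma rsum_regroup (bet : nat -> nat) (h F : nat -> R) K n :
  (forall k, (k < K)%nat -> (n <= bet k)%nat -> h k = 0) ->
  rsum (fun b => rsum (fun k => if Nat.eqb (bet k) b then h k else 0) K * F b) n =
  rsum (fun k => h k * F (bet k)) K.
Proof.
  intros Hout.
  rewrite (rsum_ext _ (fun b => rsum (fun k => if Nat.eqb (bet k) b then h k * F b else 0) K)).
  2:{ intros b Hb. rewrite Rmult_comm, <- rsum_scal. apply rsum_ext. intros. destruct (Nat.eqb (bet i) b); ring. }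
  rewrite (rsum_exchange (fun b k => if Nat.eqb (bet k) b then h k * F b else 0)).
  apply rsum_ext. intros k Hk. destruct (Nat.lt_ge_cases (bet k) n).
  - rewrite (rsum_single _ n (bet k)); auto; [rewrite Nat.eqb_refl; auto|].
    intros b Hb Hne. destruct (Nat.eqb_spec (bet k) b); auto; lia.
  - rewrite Hout by auto. rewrite (rsum_ext _ (fun _ => 0)); [rewrite rsum_zero; ring|].
    intros b Hb. destruct (Nat.eqb_spec (bet k) b); auto; lia.
Qed.

Lemma signed_directions K (U : nat -> V2) :
  exists n a (bet : nat -> nat) (ml : nat -> R), sorted a n /\
    (forall k, (k < K)%nat -> U k = vscale (ml k) (a (bet k))) /\
    (forall k, (k < K)%nat -> (n <= bet k)%nat -> ml k = 0) /\
    (forall b, (b < n)%nat -> exists k, (k < K)%nat /\ bet k = b /\ ml k <> 0).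
Proof.
  destruct (sort_directions K U) as [n [a [bet [lam [Hs [Hrep Hused]]]]]].
  set (ml := fun k => if excluded_middle_informative (U k = v0) then 0 else lam k).
  assert (Hml : forall k, (k < K)%nat -> U k <> v0 -> ml k = lam k)
    by (intros k Hk Hz; unfold ml; destruct (excluded_middle_informative (U k = v0)); tauto).
  assert (Hml0 : forall k, U k = v0 -> ml k = 0)
    by (intros k Hz; unfold ml; destruct (excluded_middle_informative (U k = v0)); tauto).
  exists n, a, bet, ml. split; [auto|split; [|split]].
  - intros k Hk. destruct (classic (U k = v0)) as [Hz|Hz].
    + rewrite Hml0, Hz by auto. destruct (a (bet k)); unfold vscale, v0; simpl; f_equal; ring.
    + rewrite Hml by auto. apply Hrep; auto.
  - intros k Hk Hb. destruct (classic (U k = v0)) as [Hz|Hz]; auto.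
    destruct (Hrep k Hk Hz). lia.
  - intros b Hb. destruct (Hused b Hb) as [k [Hk [Hz Hbk]]]. exists k. split; [auto|split; auto].
    rewrite Hml by auto. intro E. apply Hz. destruct (Hrep k Hk Hz) as [_ ->]. rewrite E.
    destruct (a (bet k)); unfold vscale, v0; simpl; f_equal; ring.
Qed.

Section DirectionGroups.
Variable N : V2 -> R.
Hypothesis HN : seminorm N.
Variables (K : nat) (U : nat -> V2).
Variables (n : nat) (a : nat -> V2) (bet : nat -> nat) (ml : nat -> R).
Hypothesis Hs : sorted a n.
Hypothesis HU : forall k, (k < K)%nat -> U k = vscale (ml k) (a (bet k)).
Hypothesis Hout : forall k, (k < K)%nat -> (n <= bet k)%nat -> ml k = 0.
Hypothesis Hcarried : forall b, (b < n)%nat -> exists k, (k < K)%nat /\ bet k = b /\ ml k <> 0.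

(* d_b gathers all the U_k in direction a_b, oriented along a_b. *)
Definition group_weight b := rsum (fun k => if Nat.eqb (bet k) b then Rabs (ml k) else 0) K.
Definition group b := vscale (group_weight b) (a b).

Lemma group_weight_pos b : (b < n)%nat -> group_weight b > 0.
Proof.
  intros Hb. destruct (Hcarried b Hb) as [k [Hk [Hkb Hmk]]]. apply rsum_pos.
  - intros i Hi. destruct (Nat.eqb (bet i) b); [apply Rabs_pos|lra].
  - exists k. split; auto. rewrite Hkb, Nat.eqb_refl. apply Rabs_pos_lt. auto.
Qed.

Lemma groups_sorted : sorted group n.
Proof. apply sorted_scale; auto. apply group_weight_pos. Qed.

Lemma groups_total_norm : rsum (fun k => N (U k)) K = rsum (fun b => N (group b)) n.
Proof.
  rewrite (rsum_ext (fun b => N (group b)) (fun b => group_weight b * N (a b))).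
  - unfold group_weight. rewrite rsum_regroup by (intros; rewrite Hout by auto; apply Rabs_R0).
    apply rsum_ext. intros k Hk. rewrite HU, sn_hom by auto. auto.
  - intros b Hb. unfold group. rewrite sn_hom by auto. rewrite Rabs_right; auto. left; apply group_weight_pos; auto.
Qed.

(* Starting the walk at the sum of the U_k pointing against their direction, every
   vertex of the zonotope walk is a subset sum of the U_k. *)
Definition neg_part k : bool := if Rlt_dec (ml k) 0 then true else false.
Definition pos_part k : bool := if Rlt_dec 0 (ml k) then true else false.
Definition walk_start := vsum (fun k => if neg_part k then U k else v0) K.

Lemma zvertex_subset_sum j : exists sel : nat -> bool,
  zvertex group n walk_start j = vsum (fun k => if sel k then U k else v0) K.
Proof.
  exists (fun k => orb (andb (used n j (bet k)) (pos_part k)) (andb (negb (used n j (bet k))) (neg_part k))).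
  apply V2_cross_eq. intro e. unfold zvertex, walk_start. rewrite cross_add_r, !cross_vsum_r.
  rewrite (rsum_ext (fun i => cross e (vscale (used_weight n j i) (group i)))
             (fun b => group_weight b * (used_weight n j b * cross e (a b)))).
  2:{ intros b Hb. unfold group. rewrite !cross_scal_r. ring. }
  unfold group_weight. rewrite rsum_regroup by (intros; rewrite Hout by auto; apply Rabs_R0).
  rewrite <- rsum_plus. apply rsum_ext. intros k Hk. rewrite !cross_if, HU, !cross_scal_r by auto.
  unfold used_weight, neg_part, pos_part.
  destruct (used n j (bet k)); destruct (Rlt_dec (ml k) 0); destruct (Rlt_dec 0 (ml k)); simpl;
    try (rewrite Rabs_right by lra); try (rewrite Rabs_left by lra); try lra;
    assert (ml k = 0) by lra; rewrite H; ring.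
Qed.

End DirectionGroups.

Lemma zonotope_polygon N (HN : seminorm N) K (U : nat -> V2) :
  exists v l, polygon_vertices v l /\
    (forall i, (i < l)%nat -> exists sel : nat -> bool, v i = vsum (fun k => if sel k then U k else v0) K) /\
    polygon_perimeter N v l = 2 * rsum (fun k => N (U k)) K.
Proof.
  destruct (signed_directions K U) as [n [a [bet [ml [Hs [HU [Hout Hcar]]]]]]].
  pose proof (groups_sorted K n a bet ml Hs Hcar) as Hds.
  pose proof (groups_total_norm N HN K U n a bet ml HU Hout Hcar) as Hsum.
  set (d := group K a bet ml) in *.
  destruct (Nat.eq_dec n 0) as [Hn0|Hn0].
  -
    exists (fun _ => v0), 0%nat. split; [|split].
    + split; [intros; lia|split; [intros; lia|left; intros; lia]].
    + intros; lia.
    + rewrite Hsum, Hn0. unfold polygon_perimeter. simpl. ring.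
  - exists (zvertex d n (walk_start K U ml)), (2 * n)%nat. split; [|split].
    + destruct (Nat.eq_dec n 1); [|apply zvertex_polygon; auto; lia].
      (* a single direction: the zonotope is a nondegenerate segment *)
      subst n. apply polygon_vertices_segment. intro E.
      pose proof (zvertex_edge_lo d 1 ltac:(lia) (walk_start K U ml) 0 ltac:(lia)) as Ed.
      simpl in Ed. rewrite E in Ed. unfold vsub in Ed. rewrite !Rminus_diag_eq in Ed by auto.
      apply (upper_nz (d 0%nat)); [apply Hds; lia|]. rewrite <- Ed. reflexivity.
    + intros j Hj. apply zvertex_subset_sum; auto.
    + rewrite zvertex_perimeter by (auto; lia). rewrite Hsum. auto.
Qed.

(** * Finite additivity and common refinements *)

Lemma pred_ext {X : Type} (P Q : X -> Prop) : (forall x, P x <-> Q x) -> P = Q.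
Proof. intros H. apply functional_extensionality. intros x. apply propositional_extensionality. auto. Qed.

(* The library's [sum_f_R0 f n] has n + 1 terms. *)
Lemma sum_f_rsum f n : sum_f_R0 f n = rsum f (S n).
Proof. induction n as [|n IH]; simpl; [ring|]. rewrite IH. auto. Qed.

Lemma Un_cv_eventually (u : nat -> R) l N0 : (forall n, (n >= N0)%nat -> u n = l) -> Un_cv u l.
Proof. intros H eps He. exists N0. intros n Hn. rewrite H by auto. unfold R_dist. rewrite Rminus_diag_eq, Rabs_R0; auto. Qed.

Lemma constant_series_limit c : Un_cv (fun n => sum_f_R0 (fun _ => c) n) c -> c = 0.
Proof.
  intros Hc. destruct (Req_dec c 0) as [|Hnz]; auto. exfalso.
  destruct (Hc (Rabs c / 2)) as [N0 HN0]; [apply Rdiv_lt_0_compat; [apply Rabs_pos_lt; auto|lra]|].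
  specialize (HN0 (S N0) ltac:(lia)). unfold R_dist in HN0. rewrite sum_f_rsum in HN0.
  assert (Hconst : forall k, rsum (fun _ => c) k = c * INR k).
  { induction k; [simpl; ring|]. change (rsum (fun _ => c) k + c = c * INR (S k)). rewrite IHk, S_INR. ring. }
  rewrite Hconst in HN0. replace (c * INR (S (S N0)) - c) with (c * INR (S N0)) in HN0 by (rewrite !S_INR; ring).
  rewrite Rabs_mult, (Rabs_right (INR (S N0))) in HN0 by (apply Rle_ge, pos_INR).
  assert (1 <= INR (S N0)) by (rewrite S_INR; pose proof (pos_INR N0); lra).
  pose proof (Rabs_pos_lt c Hnz). nra.
Qed.

Section Additivity.
Variable X : Type.
Variable Sigma : (X -> Prop) -> Prop.
Hypothesis HS : sigma_algebra Sigma.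
Variable mu : (X -> Prop) -> V2.
Hypothesis Hmu : vector_measure Sigma mu.

Definition set_empty : X -> Prop := fun _ => False.

Lemma sigma_compl E : Sigma E -> Sigma (fun x => ~ E x).
Proof. apply HS. Qed.
Lemma sigma_union (G : nat -> X -> Prop) : (forall n, Sigma (G n)) -> Sigma (fun x => exists n, G n x).
Proof. apply HS. Qed.
Lemma sigma_empty : Sigma set_empty.
Proof.
  replace set_empty with (fun x : X => ~ True) by (apply pred_ext; unfold set_empty; tauto).
  apply sigma_compl, HS.
Qed.
Lemma sigma_inter E F : Sigma E -> Sigma F -> Sigma (fun x => E x /\ F x).
Proof.
  intros HE HF.
  set (G := fun n : nat => if Nat.eqb n 0 then (fun x => ~ E x) else (fun x => ~ F x)).
  replace (fun x => E x /\ F x) with (fun x => ~ exists n, G n x).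
  - apply sigma_compl, sigma_union. intros n. unfold G. destruct (Nat.eqb n 0); apply sigma_compl; auto.
  - apply pred_ext. intros x. split.
    + intros H0. split; apply NNPP; intro Hn; apply H0; [exists 0%nat|exists 1%nat]; auto.
    + intros [He Hf] [k Hk]. unfold G in Hk. destruct (Nat.eqb k 0); auto.
Qed.
Lemma sigma_diff E F : Sigma E -> Sigma F -> Sigma (fun x => E x /\ ~ F x).
Proof. intros. apply sigma_inter; auto. apply sigma_compl; auto. Qed.

Lemma measure_empty : mu set_empty = v0.
Proof.
  destruct (Hmu (fun _ => set_empty) (fun _ => sigma_empty) ltac:(intros n m x _ [])) as [H1 H2].
  replace (fun x => exists _ : nat, set_empty x) with set_empty in H1, H2
    by (apply pred_ext; intros x; split; [intros []|intros [_ []]]).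
  apply V2_eq; apply constant_series_limit; auto.
Qed.

Lemma measure_finite_union m (E : nat -> X -> Prop) (sel : nat -> bool) :
  (forall i, (i < m)%nat -> Sigma (E i)) ->
  (forall i j x, (i < m)%nat -> (j < m)%nat -> i <> j -> E i x -> E j x -> False) ->
  Sigma (fun x => exists k, (k < m)%nat /\ sel k = true /\ E k x) /\
  mu (fun x => exists k, (k < m)%nat /\ sel k = true /\ E k x) = vsum (fun k => if sel k then mu (E k) else v0) m.
Proof.
  intros HE Hdis.
  set (G := fun n => if andb (Nat.ltb n m) (sel n) then E n else set_empty).
  assert (HG : forall n, Sigma (G n)).
  { intros n. unfold G. destruct (Nat.ltb_spec n m); destruct (sel n); simpl; auto using sigma_empty. }
  replace (fun x => exists k, (k < m)%nat /\ sel k = true /\ E k x) with (fun x => exists n, G n x).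
  2:{ apply pred_ext. intros x. unfold G, set_empty. split.
      - intros [k Hk]. destruct (Nat.ltb_spec k m); destruct (sel k) eqn:Hs; simpl in Hk; try tauto. eauto.
      - intros [k [Hk [Hs Hx]]]. exists k. destruct (Nat.ltb_spec k m); try lia. rewrite Hs; auto. }
  split; [apply sigma_union; auto|].
  assert (Hd : forall i j x, i <> j -> G i x -> G j x -> False).
  { intros i j x Hij Hi Hj. unfold G, set_empty in Hi, Hj.
    destruct (Nat.ltb_spec i m); destruct (sel i); simpl in Hi; try tauto;
    destruct (Nat.ltb_spec j m); destruct (sel j); simpl in Hj; try tauto. eapply Hdis; eauto. }
  destruct (Hmu G HG Hd) as [H1 H2].
  assert (Hval : forall i, mu (G i) = if andb (Nat.ltb i m) (sel i) then mu (E i) else v0)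
    by (intros i; unfold G; destruct (andb _ _); auto; apply measure_empty).
  (* the partial sums are eventually constant *)
  assert (Hps : forall (pr : V2 -> R), pr v0 = 0 -> forall n, (n >= m)%nat ->
             sum_f_R0 (fun i => pr (mu (G i))) n = rsum (fun k => pr (if sel k then mu (E k) else v0)) m).
  { intros pr Hpr n Hn. rewrite sum_f_rsum. replace (S n) with (m + (S n - m))%nat by lia. rewrite rsum_split.
    rewrite (rsum_ext (fun i => pr (mu (G (m + i)%nat))) (fun _ => 0)), rsum_zero, Rplus_0_r.
    - apply rsum_ext. intros i Hi. rewrite Hval. destruct (Nat.ltb_spec i m); try lia. auto.
    - intros i Hi. rewrite Hval. destruct (Nat.ltb_spec (m + i) m); try lia. auto. }
  apply V2_eq; [rewrite vsum_fst|rewrite vsum_snd]; eapply UL_sequence; eauto;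
    apply (Un_cv_eventually _ _ m); intros k Hk; [rewrite (Hps fst) by auto|rewrite (Hps snd) by auto];
    apply rsum_ext; intros; destruct (sel i); auto.
Qed.

Lemma measure_split E F : Sigma E -> Sigma F ->
  mu F = vadd (mu (fun x => F x /\ E x)) (mu (fun x => F x /\ ~ E x)).
Proof.
  intros HE HF.
  set (G := fun k : nat => if Nat.eqb k 0 then (fun x => F x /\ E x) else (fun x => F x /\ ~ E x)).
  destruct (measure_finite_union 2 G (fun _ => true)) as [_ Hadd].
  - intros i Hi. unfold G. destruct (Nat.eqb i 0); [apply sigma_inter|apply sigma_diff]; auto.
  - intros i j x Hi Hj Hij Hx1 Hx2. unfold G in *. destruct i as [|[|]]; destruct j as [|[|]]; try lia; simpl in *; tauto.
  - replace (fun x => exists k, (k < 2)%nat /\ true = true /\ G k x) with F in Hadd.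
    + rewrite Hadd. simpl. unfold G; simpl. destruct (mu (fun x => F x /\ E x)), (mu (fun x => F x /\ ~ E x)).
      unfold vadd, v0; simpl; f_equal; ring.
    + apply pred_ext. intros x. split.
      * intros Hx. destruct (classic (E x)); [exists 0%nat|exists 1%nat]; unfold G; simpl; auto.
      * intros [k [Hk [_ Hx]]]. unfold G in Hx. destruct (Nat.eqb k 0); tauto.
Qed.

End Additivity.

Section Refinement.
Variable X : Type.
Variable Sigma : (X -> Prop) -> Prop.
Hypothesis HS : sigma_algebra Sigma.
Variable mu : (X -> Prop) -> V2.
Hypothesis Hmu : vector_measure Sigma mu.
Variable A : X -> Prop.
Hypothesis HA : Sigma A.

Definition partition (F : nat -> X -> Prop) K : Prop :=
  (forall k, (k < K)%nat -> Sigma (F k)) /\ (forall k x, (k < K)%nat -> F k x -> A x) /\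
  (forall i j x, (i < K)%nat -> (j < K)%nat -> i <> j -> F i x -> F j x -> False) /\
  (forall x, A x -> exists k, (k < K)%nat /\ F k x).

Definition subset_sum (F : nat -> X -> Prop) K (E : X -> Prop) : Prop :=
  exists c : nat -> bool, mu E = vsum (fun k => if c k then mu (F k) else v0) K.

Lemma partition_whole : partition (fun _ => A) 1.
Proof. split; [|split; [|split]]; auto; [intros; lia|]. intros x Hx. exists 0%nat; auto. Qed.

Definition cut (F : nat -> X -> Prop) K (E : X -> Prop) : nat -> X -> Prop :=
  fun j => if Nat.ltb j K then (fun x => F j x /\ E x) else (fun x => F (j - K)%nat x /\ ~ E x).

Lemma cut_lo F K E j : (j < K)%nat -> cut F K E j = (fun x => F j x /\ E x).
Proof. intros. unfold cut. destruct (Nat.ltb_spec j K); auto; lia. Qed.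
Lemma cut_hi F K E j : (K <= j)%nat -> cut F K E j = (fun x => F (j - K)%nat x /\ ~ E x).
Proof. intros. unfold cut. destruct (Nat.ltb_spec j K); auto; lia. Qed.

Lemma cut_partition F K E : partition F K -> Sigma E -> partition (cut F K E) (K + K).
Proof.
  intros [HF1 [HF2 [HF3 HF4]]] HE. split; [|split; [|split]].
  - intros k Hk. destruct (Nat.lt_ge_cases k K).
    + rewrite cut_lo by auto. apply sigma_inter; auto.
    + rewrite cut_hi by auto. apply sigma_diff; auto. apply HF1; lia.
  - intros k x Hk Hx. destruct (Nat.lt_ge_cases k K).
    + rewrite cut_lo in Hx by auto. apply (HF2 k); tauto.
    + rewrite cut_hi in Hx by auto. apply (HF2 (k - K)%nat); [lia|tauto].
  - intros i j x Hi Hj Hij Hxi Hxj.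
    destruct (Nat.lt_ge_cases i K); destruct (Nat.lt_ge_cases j K);
      [rewrite cut_lo in Hxi, Hxj by auto|rewrite cut_lo in Hxi by auto; rewrite cut_hi in Hxj by auto
      |rewrite cut_hi in Hxi by auto; rewrite cut_lo in Hxj by auto|rewrite cut_hi in Hxi, Hxj by auto]; try tauto.
    + apply (HF3 i j x); tauto.
    + apply (HF3 (i - K)%nat (j - K)%nat x); try lia; tauto.
  - intros x Hx. destruct (HF4 x Hx) as [k [Hk Hkx]]. destruct (classic (E x)).
    + exists k. split; [lia|]. rewrite cut_lo by auto. auto.
    + exists (K + k)%nat. split; [lia|]. rewrite cut_hi by lia. replace (K + k - K)%nat with k by lia. auto.
Qed.

Lemma cut_represents F K E : partition F K -> Sigma E -> (forall x, E x -> A x) ->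
  subset_sum (cut F K E) (K + K) E.
Proof.
  intros HF HE HEA. pose proof (cut_partition F K E HF HE) as [Hc1 [_ [Hc3 _]]].
  destruct HF as [_ [_ [_ HF4]]].
  exists (fun j => Nat.ltb j K).
  destruct (measure_finite_union X Sigma HS mu Hmu (K + K) (cut F K E) (fun j => Nat.ltb j K) Hc1 Hc3) as [_ Hadd].
  rewrite <- Hadd. f_equal. apply pred_ext. intros x. split.
  - intros Hx. destruct (HF4 x (HEA x Hx)) as [k [Hk Hkx]]. exists k. split; [lia|].
    rewrite cut_lo by auto. destruct (Nat.ltb_spec k K); [auto|lia].
  - intros [k [Hk [Hs Hx]]]. destruct (Nat.ltb_spec k K); try discriminate. rewrite cut_lo in Hx by auto. tauto.
Qed.

(* Every cell of F is the union of its two halves, so subset sums survive the cut. *)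
Lemma cut_preserves F K E E' : partition F K -> Sigma E ->
  subset_sum F K E' -> subset_sum (cut F K E) (K + K) E'.
Proof.
  intros [HF1 _] HE [c Hc]. exists (fun j => if Nat.ltb j K then c j else c (j - K)%nat). rewrite Hc.
  apply V2_cross_eq. intros e. rewrite !cross_vsum_r, rsum_split, <- rsum_plus.
  apply rsum_ext. intros k Hk. rewrite !cross_if.
  destruct (Nat.ltb_spec k K); try lia. destruct (Nat.ltb_spec (K + k) K); try lia.
  replace (K + k - K)%nat with k by lia. rewrite cut_lo, cut_hi by lia. replace (K + k - K)%nat with k by lia.
  rewrite (measure_split X Sigma HS mu Hmu E (F k)) by auto. destruct (c k); [rewrite cross_add_r; auto|ring].
Qed.

Lemma common_refinement F K n (G : nat -> X -> Prop) : partition F K ->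
  (forall j, (j < n)%nat -> Sigma (G j) /\ (forall x, G j x -> A x)) ->
  exists F' K', partition F' K' /\ (forall j, (j < n)%nat -> subset_sum F' K' (G j)) /\
    (forall E, subset_sum F K E -> subset_sum F' K' E).
Proof.
  intros Hd HG. induction n.
  - exists F, K. split; auto. split; [intros; lia|auto].
  - destruct IHn as [F1 [K1 [Hd1 [HR1 HP1]]]]; [intros; apply HG; lia|].
    destruct (HG n ltac:(lia)) as [HGn HGnA].
    exists (cut F1 K1 (G n)), (K1 + K1)%nat. split; [apply cut_partition; auto|split].
    + intros j Hj. destruct (Nat.eq_dec j n); [subst; apply cut_represents; auto|].
      apply cut_preserves; auto. apply HR1; lia.
    + intros E HE. apply cut_preserves; auto.
Qed.

Lemma combination_of_subset_sums F K n (w : nat -> R) (E : nat -> X -> Prop) :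
  (forall j, (j < n)%nat -> 0 <= w j /\ subset_sum F K (E j)) ->
  exists t : nat -> R, (forall k, (k < K)%nat -> 0 <= t k <= rsum w n) /\
    vsum (fun j => vscale (w j) (mu (E j))) n = vsum (fun k => vscale (t k) (mu (F k))) K.
Proof.
  induction n; intros H.
  - exists (fun _ => 0). split; [intros; simpl; lra|]. apply V2_cross_eq. intros e. rewrite !cross_vsum_r.
    simpl. rewrite (rsum_ext _ (fun _ => 0)), rsum_zero; auto. intros; rewrite cross_scal_r; ring.
  - destruct IHn as [t [Ht E1]]; [intros; apply H; lia|].
    destruct (H n ltac:(lia)) as [Hw [c Hc]].
    exists (fun k => t k + (if c k then w n else 0)). split.
    + intros k Hk. specialize (Ht k Hk). simpl. destruct (c k); lra.
    + simpl. rewrite E1, Hc. apply V2_cross_eq. intros e.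
      rewrite cross_add_r, !cross_vsum_r, cross_scal_r, cross_vsum_r, <- rsum_scal, <- rsum_plus.
      apply rsum_ext. intros k Hk. rewrite cross_if, !cross_scal_r. destruct (c k); ring.
Qed.

End Refinement.

(** * The two inequalities and the theorem *)

Lemma choice_nat {T : Type} (P : nat -> T -> Prop) : (forall j, exists x, P j x) -> exists f, forall j, P j (f j).
Proof.
  intros H. exists (fun j => proj1_sig (constructive_indefinite_description _ (H j))).
  intros j. apply (proj2_sig (constructive_indefinite_description _ (H j))).
Qed.

(* Enlarging a zonotope by the box [0, 2 dl]^2 (translated by (-dl, -dl)) captures
   every point within dl of it in each coordinate. *)
Definition add_box (U : nat -> V2) K dl : nat -> V2 :=
  fun k => if Nat.ltb k K then U k else if Nat.eqb k K then (2 * dl, 0) else (0, 2 * dl).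

Lemma in_zonotope_box U K dl p q : dl > 0 -> in_zonotope v0 U K q ->
  Rabs (fst p - fst q) < dl -> Rabs (snd p - snd q) < dl ->
  in_zonotope (- dl, - dl) (add_box U K dl) (S (S K)) p.
Proof.
  intros Hdl [t [Ht Eq]] Hx Hy. apply Rabs_def2 in Hx. apply Rabs_def2 in Hy.
  set (s1 := (fst p - fst q + dl) / (2 * dl)). set (s2 := (snd p - snd q + dl) / (2 * dl)).
  assert (Hunit : forall r, - dl < r < dl -> 0 <= (r + dl) / (2 * dl) <= 1).
  { intros r Hr. split; [apply Rmult_le_pos; [lra|left; apply Rinv_0_lt_compat; lra]|].
    apply (Rmult_le_reg_r (2 * dl)); [lra|]. unfold Rdiv. rewrite Rmult_assoc, Rinv_l; lra. }
  exists (fun k => if Nat.ltb k K then t k else if Nat.eqb k K then s1 else s2). split.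
  - intros k Hk. destruct (Nat.ltb_spec k K); [apply Ht; auto|].
    destruct (Nat.eqb_spec k K); [apply Hunit|apply Hunit]; lra.
  - change (vsum ?f (S (S K))) with (vadd (vadd (vsum f K) (f K)) (f (S K))). cbv beta.
    rewrite (vsum_ext _ (fun k => vscale (t k) (U k))).
    2:{ intros k Hk. unfold add_box. destruct (Nat.ltb_spec k K); try lia. auto. }
    unfold add_box. rewrite Nat.ltb_irrefl, Nat.eqb_refl.
    replace (Nat.ltb (S K) K) with false by (symmetry; apply Nat.ltb_ge; lia).
    replace (Nat.eqb (S K) K) with false by (symmetry; apply Nat.eqb_neq; lia).
    replace (vsum (fun k => vscale (t k) (U k)) K) with q by (rewrite Eq; destruct (vsum _ K); unfold vadd, v0; simpl; f_equal; ring).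
    unfold s1, s2. destruct p as [a b], q as [c d]. unfold vadd, vscale; simpl in *. f_equal; field; lra.
Qed.

Section VectorMeasure.
Variable N : V2 -> R.
Hypothesis HN : seminorm N.
Variable X : Type.
Variable Sigma : (X -> Prop) -> Prop.
Hypothesis HS : sigma_algebra Sigma.
Variable mu : (X -> Prop) -> V2.
Hypothesis Hmu : vector_measure Sigma mu.
Variable A : X -> Prop.
Hypothesis HA : Sigma A.

Definition values : V2 -> Prop := fun v => exists E, Sigma E /\ (forall x, E x -> A x) /\ v = mu E.

Lemma twice_variation_is_perimeter r :
  total_variation_set N Sigma mu A r -> perimeter_set N (vrange Sigma mu A) (2 * r).
Proof.
  intros [m [E [HE1 [HE2 [HE3 Hr]]]]].
  destruct (zonotope_polygon N HN m (fun k => mu (E k))) as [v [l [Hpv [Hsel Hper]]]].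
  exists v, l. split; [auto|split; [|rewrite Hper, Hr; auto]].
  intros p Hp. apply closure_self. eapply conv_mono; [|exact Hp].
  intros q [i [Hi ->]]. destruct (Hsel i Hi) as [sel ->].
  destruct (measure_finite_union X Sigma HS mu Hmu m E sel HE1 HE3) as [HS1 HS2].
  exists (fun x => exists k, (k < m)%nat /\ sel k = true /\ E k x). split; [auto|split; [|auto]].
  intros x [k [Hk [_ Hx]]]. eapply HE2; eauto.
Qed.

Lemma conv_values_sets q : conv values q -> exists n (w : nat -> R) (E : nat -> X -> Prop),
  (forall j, (j < n)%nat -> 0 <= w j /\ Sigma (E j) /\ (forall x, E j x -> A x)) /\ rsum w n = 1 /\
  q = vsum (fun j => vscale (w j) (mu (E j))) n.
Proof.
  intros [n [w [Q [H1 [H2 H3]]]]].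
  destruct (choice_nat (fun j E => (j < n)%nat -> Sigma E /\ (forall x, E x -> A x) /\ Q j = mu E)) as [Ef HEf].
  { intros j. destruct (Nat.lt_ge_cases j n).
    - destruct (H1 j H) as [_ [E [HE1 [HE2 HE3]]]]. exists E. auto.
    - exists A. intros; lia. }
  exists n, w, Ef. split; [|split]; auto.
  - intros j Hj. destruct (H1 j Hj). destruct (HEf j Hj) as [? [? ?]]. auto.
  - rewrite H3. apply vsum_ext. intros i Hi. destruct (HEf i Hi) as [_ [_ ->]]. auto.
Qed.

Lemma conv_values_in_partition_zonotope (q : nat -> V2) l :
  (forall i, (i < l)%nat -> conv values (q i)) ->
  exists F K, partition X Sigma A F K /\ (forall i, (i < l)%nat -> in_zonotope v0 (fun k => mu (F k)) K (q i)).
Proof.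
  intros Hq.
  assert (Hrep : forall l', (l' <= l)%nat -> exists F K, partition X Sigma A F K /\
            forall i, (i < l')%nat -> exists n (w : nat -> R) (E : nat -> X -> Prop),
              (forall j, (j < n)%nat -> 0 <= w j /\ subset_sum X mu F K (E j)) /\ rsum w n = 1 /\
              q i = vsum (fun j => vscale (w j) (mu (E j))) n).
  { induction l'; intros Hl'.
    - exists (fun _ => A), 1%nat. split; [apply partition_whole; auto|intros; lia].
    - destruct IHl' as [F [K [Hd HR]]]; [lia|].
      destruct (conv_values_sets _ (Hq l' ltac:(lia))) as [n [w [E [HE1 [HE2 HE3]]]]].
      destruct (common_refinement X Sigma HS mu Hmu A F K n E Hd) as [F' [K' [Hd' [HR' HP']]]].
      { intros j Hj. destruct (HE1 j Hj) as [_ [? ?]]. auto. }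
      exists F', K'. split; auto. intros i Hi. destruct (Nat.eq_dec i l').
      + subst. exists n, w, E. split; auto. intros j Hj. split; [apply HE1; auto|apply HR'; auto].
      + destruct (HR i ltac:(lia)) as [n1 [w1 [E1 [H1 [H2 H3]]]]]. exists n1, w1, E1. split; auto.
        intros j Hj. destruct (H1 j Hj). split; auto. }
  destruct (Hrep l ltac:(lia)) as [F [K [Hd HR]]]. exists F, K. split; auto.
  intros i Hi. destruct (HR i Hi) as [n [w [E [H1 [H2 H3]]]]].
  destruct (combination_of_subset_sums X mu F K n w E H1) as [t [Ht Et]]. rewrite H2 in Ht.
  exists t. split; auto. rewrite H3, Et. destruct (vsum _ K); unfold vadd, v0; simpl; f_equal; ring.
Qed.

(* Upper bound: a convex polygon P in the range is, up to an arbitrarily small box,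
   inside the zonotope of a partition F of A, so Per(P) <= 2 sum_k N(mu(F_k)) + O(dl). *)
Lemma perimeter_le_twice_variation s : (forall r, total_variation_set N Sigma mu A r -> r <= s) ->
  forall P, perimeter_set N (vrange Sigma mu A) P -> P <= 2 * s.
Proof.
  intros Hs P [v [l [Hpv [Hin ->]]]].
  apply (le_epsilon_slack _ _ (4 * (N (1, 0) + N (0, 1)))).
  { pose proof (sn_nonneg N HN (1, 0)). pose proof (sn_nonneg N HN (0, 1)). lra. }
  intros dl Hdl.
  assert (Happrox : forall i, exists q, (i < l)%nat ->
            conv values q /\ Rabs (fst (v i) - fst q) < dl /\ Rabs (snd (v i) - snd q) < dl).
  { intros i. destruct (Nat.lt_ge_cases i l); [|exists v0; intros; lia].
    assert (Hvi : vrange Sigma mu A (v i)) by (apply Hin, conv_point; exists i; auto).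
    destruct (Hvi dl Hdl) as [q Hq]. exists q. auto. }
  destruct (choice_nat _ Happrox) as [q Hq].
  destruct (conv_values_in_partition_zonotope q l) as [F [K [[HF1 [HF2 [HF3 _]]] HZ]]];
    [intros i Hi; apply Hq; auto|].
  pose proof (perimeter_in_zonotope N HN v l Hpv (S (S K)) (add_box (fun k => mu (F k)) K dl) (- dl, - dl)) as Hper.
  assert (HTV : rsum (fun k => N (mu (F k))) K <= s) by (apply Hs; exists K, F; auto).
  assert (Hbox : rsum (fun k => N (add_box (fun k => mu (F k)) K dl k)) (S (S K)) =
                 rsum (fun k => N (mu (F k))) K + 2 * dl * (N (1, 0) + N (0, 1))).
  { simpl. unfold add_box at 2 3. rewrite Nat.ltb_irrefl, Nat.eqb_refl.
    replace (Nat.ltb (S K) K) with false by (symmetry; apply Nat.ltb_ge; lia).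
    replace (Nat.eqb (S K) K) with false by (symmetry; apply Nat.eqb_neq; lia).
    rewrite (rsum_ext _ (fun k => N (mu (F k)))) by (intros k Hk; unfold add_box; destruct (Nat.ltb_spec k K); lia || auto).
    replace (2 * dl, 0) with (vscale (2 * dl) (1, 0)) by (unfold vscale; simpl; f_equal; ring).
    replace (0, 2 * dl) with (vscale (2 * dl) (0, 1)) by (unfold vscale; simpl; f_equal; ring).
    rewrite !sn_hom, Rabs_right by (auto || lra). ring. }
  rewrite Hbox in Hper. assert (Hv : forall i, (i < l)%nat -> in_zonotope (- dl, - dl) (add_box (fun k => mu (F k)) K dl) (S (S K)) (v i))
    by (intros i Hi; destruct (Hq i Hi) as [_ [Hx Hy]]; apply (in_zonotope_box _ _ _ _ (q i)); auto).
  specialize (Hper Hv). lra.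
Qed.

End VectorMeasure.

Theorem theorem1p6 (N : V2 -> R) (HN : seminorm N)
  (X : Type) (Sigma : (X -> Prop) -> Prop) (HS : sigma_algebra Sigma)
  (mu : (X -> Prop) -> V2) (Hmu : vector_measure Sigma mu)
  (A : X -> Prop) (HA : Sigma A) :
  forall s : R,
    is_lub (total_variation_set N Sigma mu A) s <->
    is_lub (perimeter_set N (vrange Sigma mu A)) (2 * s).
Proof.
  pose proof (twice_variation_is_perimeter N HN X Sigma HS mu Hmu A) as Hlow.
  pose proof (perimeter_le_twice_variation N HN X Sigma HS mu Hmu A HA) as Hup.
  intros s. split; intros [Hub Hleast]; split.
  - intros P HP. apply (Hup s); auto.
  - intros b Hb. assert (s <= b / 2); [|lra].
    apply Hleast. intros r Hr. pose proof (Hb _ (Hlow r Hr)). lra.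
  - intros r Hr. pose proof (Hub _ (Hlow r Hr)). lra.
  - intros t Ht. assert (2 * s <= 2 * t); [|lra].
    apply Hleast. intros P HP. apply (Hup t); auto.
Qed.
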